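(* Let $\Omega$ be the set of all valid triples $\{\varphi\}\ a\ \{\psi\}$ with $a\in\mathsf{Act}$. For every well-formed program $C$ and every assertion $\varphi\subseteq\mathcal W(\Sigma)$, $\Omega\vdash\{\varphi\}\ C\ \{\mathrm{post}(C,\varphi)\}$, where $\mathrm{post}(C,\varphi)=\{[\![C]\!]^\dagger(m): m\in\varphi\}$.
   Context: Semiring and weights. Let $\mathcal A=\langle U,+,\cdot,\mathbf 0,\mathbf 1\rangle$ be a partial semiring: $\langle U,+,\mathbf 0\rangle$ is a commutative monoid in which $+$ may be partial, $\langle U,\cdot,\mathbf 1\rangle$ is a monoid with $\cdot$ total, $\cdot$ distributes over $+$ on both sides, and $\mathbf 0$ annihilates. Natural order: $u\le v$ iff $u+w=v$ for some $w$. Assume $\mathcal A$ is naturally ordered ($\le$ a partial order), Scott continuous ($+$ and $\cdot$ preserve suprema of directed sets in each argument), and has a top element. Infinite sums $\sum_{i\in I}u_i$ are suprema of finite partial sums. $\mathcal W(X)$ is the set of $m:X\to U$ with countable support $\mathrm{supp}(m)=\{x:m(x)\neq\mathbf 0\}$ and defined mass $|m|=\sum_{x\in\mathrm{supp}(m)}m(x)$; operations $+$, $u\cdot m$, $m\cdot u$, $\mathbf 0$ are pointwise and $m_1\sqsubseteq m_2$ iff $m_1+m=m_2$ for some $m$. $\eta(x)(y)=\mathbf 1$ if $x=y$, else $\mathbf 0$; $f^\dagger(m)(y)=\sum_{x\in\mathrm{supp}(m)}m(x)\cdot f(x)(y)$. Programs. States $\Sigma$, atomic actions $\mathsf{Act}$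 with $[\![a]\!]_{\mathsf{Act}}:\Sigma\to\mathcal W(\Sigma)$, primitive tests $\mathsf{Test}\subseteq 2^\Sigma$. Syntax: $C::=\mathsf{skip}\mid C_1;C_2\mid C_1+C_2\mid\mathsf{assume}\ e\mid C^{\langle e,e'\rangle}\mid a$; $e::=b\mid u$ ($u\in U$); $b::=\mathsf{true}\mid\mathsf{false}\mid b_1\vee b_2\mid b_1\wedge b_2\mid\neg b\mid t$ ($t\in\mathsf{Test}$). Tests evaluate to $\mathbf 0/\mathbf 1$ by Boolean evaluation with $[\![t]\!](\sigma)=\mathbf 1$ iff $\sigma\in t$; $[\![u]\!](\sigma)=u$. Semantics: $[\![\mathsf{skip}]\!](\sigma)=\eta(\sigma)$; $[\![C_1;C_2]\!](\sigma)=[\![C_2]\!]^\dagger([\![C_1]\!](\sigma))$; $[\![C_1+C_2]\!](\sigma)=[\![C_1]\!](\sigma)+[\![C_2]\!](\sigma)$; $[\![a]\!]=[\![a]\!]_{\mathsf{Act}}$; $[\![\mathsf{assume}\ e]\!](\sigma)=[\![e]\!](\sigma)\cdot\eta(\sigma)$; $[\![C^{\langle e,e'\rangle}]\!]$ is the least fixed point (pointwise order) of $\Phi(f)(\sigma)=[\![e]\!](\sigma)\cdot f^\dagger([\![C]\!](\sigma))+[\![e']\!](\sigma)\cdot\eta(\sigma)$. Well-formed: semantics is total. Assertions and triples. Assertions are subsets of $\mathcal W(\Sigma)$; $\bigoplus_{x\in T}\phi(x)=\{\sum_{t\in T}m_t: m_t\in\phi(t)\ \forall t\}$, $\varphi\oplus\psi$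 the binary case, $u\odot\varphi=\{u\cdot m: m\in\varphi\}$, $\varphi\odot u=\{m\cdot u:m\in\varphi\}$. $\vDash\{\varphi\}C\{\psi\}$ iff $[\![C]\!]^\dagger(m)\in\psi$ for all $m\in\varphi$. Proof system. $\Gamma\vdash\{\varphi\}C\{\psi\}$: derivable from axioms in $\Gamma$ using: (Skip) $\{\varphi\}\mathsf{skip}\{\varphi\}$; (Seq) $\{\varphi\}C_1\{\vartheta\},\{\vartheta\}C_2\{\psi\}\Rightarrow\{\varphi\}C_1;C_2\{\psi\}$; (Plus) $\{\varphi\}C_1\{\psi_1\},\{\varphi\}C_2\{\psi_2\}\Rightarrow\{\varphi\}C_1+C_2\{\psi_1\oplus\psi_2\}$; (Assume) if $[\![e]\!](\sigma)=u$ for all $m\in\varphi$, $\sigma\in\mathrm{supp}(m)$ then $\{\varphi\}\mathsf{assume}\ e\{\varphi\odot u\}$; (Iter) if $(\psi_n)_{n\in\mathbb N}$ converges to $\psi_\infty$ (whenever $m_n\in\psi_n$ for all $n$, $\sum_n m_n\in\psi_\infty$) and for all $n$, $\{\varphi_n\}\mathsf{assume}\ e;C\{\varphi_{n+1}\}$ and $\{\varphi_n\}\mathsf{assume}\ e'\{\psi_n\}$, then $\{\varphi_0\}C^{\langle e,e'\rangle}\{\psi_\infty\}$; (False) $\{\emptyset\}C\{\varphi\}$; (True) $\{\varphi\}C\{\mathcal W(\Sigma)\}$; (Scale) $\{\varphi\}C\{\psi\}\Rightarrow\{u\odot\varphi\}C\{u\odot\psi\}$; (Disj), (Conj): combine two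 triples with $\cup$, resp. $\cap$, on both sides; (Choice) $\forall t\in T.\{\phi(t)\}C\{\phi'(t)\}\Rightarrow\{\bigoplus_{x\in T}\phi(x)\}C\{\bigoplus_{x\in T}\phi'(x)\}$; (Exists) same premises $\Rightarrow\{\bigcup_t\phi(t)\}C\{\bigcup_t\phi'(t)\}$; (Consequence) $\varphi'\subseteq\varphi$, $\{\varphi\}C\{\psi\}$, $\psi\subseteq\psi'\Rightarrow\{\varphi'\}C\{\psi'\}$. *)

From Stdlib Require Import List ClassicalEpsilon.
Import ListNotations.

Set Implicit Arguments.
Unset Strict Implicit.

Section Order.
Variable U : Type.
Variable add : U -> U -> option U.

Definition nle (u v : U) : Prop := exists w, add u w = Some v.

Definition is_sup (D : U -> Prop) (s : U) : Prop :=
  (forall d, D d -> nle d s) /\ (forall b, (forall d, D d -> nle d b) -> nle s b).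

Definition directed (D : U -> Prop) : Prop :=
  (exists d, D d) /\
  (forall x y, D x -> D y -> exists z, D z /\ nle x z /\ nle y z).
End Order.

Record PSemiring := {
  car :> Type;
  padd : car -> car -> option car;
  pmul : car -> car -> car;
  pzero : car;
  pone : car;
  padd_comm : forall a b, padd a b = padd b a;
  padd_0r : forall a, padd a pzero = Some a;
  padd_assoc : forall a b c ab abc, padd a b = Some ab -> padd ab c = Some abc ->
      exists bc, padd b c = Some bc /\ padd a bc = Some abc;
  pmul_assoc : forall a b c, pmul a (pmul b c) = pmul (pmul a b) c;
  pmul_1l : forall a, pmul pone a = a;
  pmul_1r : forall a, pmul a pone = a;
  pmul_addr : forall a b c s, padd a b = Some s -> padd (pmul c a) (pmul c b) = Some (pmul c s);
  pmul_addl : forall a b c s, padd a b = Some s -> padd (pmul a c) (pmul b c) = Some (pmul s c);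
  pmul_0l : forall a, pmul pzero a = pzero;
  pmul_0r : forall a, pmul a pzero = pzero;
  (* naturally ordered: the natural order is antisymmetric (refl/trans hold) *)
  nle_antisym : forall a b, nle padd a b -> nle padd b a -> a = b;
  dir_sup : forall D, directed padd D -> exists s, is_sup padd D s;
  padd_cont : forall a D s, directed padd D -> is_sup padd D s ->
      (forall d, D d -> exists v, padd a d = Some v) ->
      exists v, padd a s = Some v /\
        is_sup padd (fun w => exists d, D d /\ padd a d = Some w) v;
  pmul_contl : forall a D s, directed padd D -> is_sup padd D s ->
      is_sup padd (fun w => exists d, D d /\ w = pmul a d) (pmul a s);
  pmul_contr : forall a D s, directed padd D -> is_sup padd D s ->
      is_sup padd (fun w => exists d, D d /\ w = pmul d a) (pmul s a);
  ptop_ex : exists t, forall u, nle padd u t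
}.

Section Weights.
Variable S : PSemiring.
Local Notation U := (car S).
Local Notation add := (@padd S).
Local Notation mul := (@pmul S).
Local Notation zero := (pzero S).
Local Notation one := (pone S).

Definition fsum {X : Type} (l : list X) (f : X -> U) : option U :=
  fold_right (fun x acc => match acc with Some s => add (f x) s | None => None end)
             (Some zero) l.

Definition finite_sub {X : Type} (I : X -> Prop) (l : list X) : Prop :=
  NoDup l /\ (forall x, In x l -> I x).

Definition is_sum {X : Type} (I : X -> Prop) (f : X -> U) (s : U) : Prop :=
  (forall l, finite_sub I l -> fsum l f <> None) /\
  is_sup add (fun v => exists l, finite_sub I l /\ fsum l f = Some v) s.

Definition countable {X : Type} (A : X -> Prop) : Prop :=
  exists h : X -> nat, forall x y, A x -> A y -> h x = h y -> x = y.

Definition supp {X : Type} (m : X -> U) : X -> Prop := fun x => m x <> zero.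

Definition is_weight {X : Type} (m : X -> U) : Prop :=
  countable (supp m) /\ exists s, is_sum (supp m) m s.

Definition wadd {X : Type} (m1 m2 m : X -> U) : Prop :=
  forall x, add (m1 x) (m2 x) = Some (m x).

Definition lscale {X : Type} (u : U) (m : X -> U) : X -> U := fun x => mul u (m x).
Definition rscale {X : Type} (m : X -> U) (u : U) : X -> U := fun x => mul (m x) u.

Definition wle {X : Type} (m1 m2 : X -> U) : Prop :=
  exists m, is_weight m /\ wadd m1 m m2.

Definition eta {X : Type} (x : X) : X -> U :=
  fun y => if excluded_middle_informative (x = y) then one else zero.

(* Kleisli extension (relational, since + is partial):
   bind f m m'  <->  m' = f^dagger(m) *)
Definition bind {X Y : Type} (f : X -> (Y -> U) -> Prop) (m : X -> U) (m' : Y -> U) : Prop :=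
  exists g : X -> Y -> U,
    (forall x, supp m x -> f x (g x)) /\
    (forall y, is_sum (supp m) (fun x => mul (m x) (g x y)) (m' y)) /\
    is_weight m'.

Definition sumfam {T X : Type} (ms : T -> X -> U) (m : X -> U) : Prop :=
  (forall x, is_sum (fun _ : T => True) (fun t => ms t x) (m x)) /\ is_weight m.

End Weights.

Section Programs.
Variable S : PSemiring.
Variables (Sigma Act Tst : Type).
Variable asem : Act -> Sigma -> (Sigma -> car S).
Variable tsem : Tst -> Sigma -> bool.

Inductive bexp :=
| BTrue | BFalse | BOr (b1 b2 : bexp) | BAnd (b1 b2 : bexp) | BNot (b : bexp)
| BTest (t : Tst).

Inductive exp := EB (b : bexp) | EU (u : car S).

Inductive cmd :=
| Skip | Seq (C1 C2 : cmd) | Plus (C1 C2 : cmd) | Assume (e : exp)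
| Iter (C : cmd) (e e' : exp) | Atom (a : Act).

Fixpoint beval (b : bexp) (s : Sigma) : bool :=
  match b with
  | BTrue => true | BFalse => false
  | BOr b1 b2 => orb (beval b1 s) (beval b2 s)
  | BAnd b1 b2 => andb (beval b1 s) (beval b2 s)
  | BNot b => negb (beval b s)
  | BTest t => tsem t s
  end.

Definition eeval (e : exp) (s : Sigma) : car S :=
  match e with
  | EB b => if beval b s then pone S else pzero S
  | EU u => u
  end.

(* Phi(f)(s) = [[e]](s) . f^dagger([[C]](s)) + [[e']](s) . eta(s), relationally *)
Definition PhiR (semC : Sigma -> (Sigma -> car S) -> Prop) (e e' : exp)
    (f : Sigma -> Sigma -> car S) (s : Sigma) (r : Sigma -> car S) : Prop :=
  exists mC b, semC s mC /\ bind (fun x m => m = f x) mC b /\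
    wadd (lscale (eeval e s) b) (lscale (eeval e' s) (eta S s)) r /\ is_weight r.

Definition is_fix semC e e' (f : Sigma -> Sigma -> car S) : Prop :=
  (forall s, is_weight (f s)) /\ (forall s, PhiR semC e e' f s (f s)).

Definition is_lfp semC e e' (f : Sigma -> Sigma -> car S) : Prop :=
  is_fix semC e e' f /\
  forall g, is_fix semC e e' g -> forall s, wle (f s) (g s).

(* sem C s m  <->  [[C]](s) = m *)
Fixpoint sem (C : cmd) : Sigma -> (Sigma -> car S) -> Prop :=
  match C with
  | Skip => fun s m => m = eta S s
  | Seq C1 C2 => fun s m => exists m1, sem C1 s m1 /\ bind (sem C2) m1 m
  | Plus C1 C2 => fun s m => exists m1 m2, sem C1 s m1 /\ sem C2 s m2 /\
                                 wadd m1 m2 m /\ is_weight m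
  | Assume e => fun s m => m = lscale (eeval e s) (eta S s)
  | Iter C e e' => fun s m => exists f, is_lfp (sem C) e e' f /\ m = f s
  | Atom a => fun s m => m = asem a s
  end.

Definition well_formed (C : cmd) : Prop := forall s, exists m, sem C s m.

Definition asrt := (Sigma -> car S) -> Prop.

Definition asrtW (p : asrt) : Prop := forall m, p m -> is_weight m.
Definition Wall : asrt := fun m => is_weight m.
Definition aempty : asrt := fun _ => False.

Definition bigoplus {T : Type} (p : T -> asrt) : asrt :=
  fun m => exists ms : T -> Sigma -> car S, (forall t, p t (ms t)) /\ sumfam ms m.
Definition oplus (p q : asrt) : asrt :=
  fun m => exists m1 m2, p m1 /\ q m2 /\ wadd m1 m2 m /\ is_weight m.
Definition aodot_l (u : car S) (p : asrt) : asrt :=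
  fun m => exists m0, p m0 /\ m = lscale u m0.
Definition aodot_r (p : asrt) (u : car S) : asrt :=
  fun m => exists m0, p m0 /\ m = rscale m0 u.
Definition aunion {T : Type} (p : T -> asrt) : asrt := fun m => exists t, p t m.

Definition valid (p : asrt) (C : cmd) (q : asrt) : Prop :=
  forall m m', p m -> bind (sem C) m m' -> q m'.

Definition post (C : cmd) (p : asrt) : asrt :=
  fun m' => exists m, p m /\ bind (sem C) m m'.

Definition converges (ps : nat -> asrt) (pinf : asrt) : Prop :=
  forall (ms : nat -> Sigma -> car S) m,
    (forall n, ps n (ms n)) -> sumfam ms m -> pinf m.

Definition triples := asrt -> cmd -> asrt -> Prop.

Inductive derives (G : triples) : asrt -> cmd -> asrt -> Prop :=
| d_ax : forall p C q, G p C q -> derives G p C q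
| d_skip : forall p, asrtW p -> derives G p Skip p
| d_seq : forall p r q C1 C2, derives G p C1 r -> derives G r C2 q ->
    derives G p (Seq C1 C2) q
| d_plus : forall p q1 q2 C1 C2, derives G p C1 q1 -> derives G p C2 q2 ->
    derives G p (Plus C1 C2) (oplus q1 q2)
| d_assume : forall p e u, asrtW p ->
    (forall m s, p m -> supp m s -> eeval e s = u) ->
    derives G p (Assume e) (aodot_r p u)
| d_iter : forall (ps qs : nat -> asrt) qinf C e e', asrtW qinf ->
    converges qs qinf ->
    (forall n, derives G (ps n) (Seq (Assume e) C) (ps (Datatypes.S n))) ->
    (forall n, derives G (ps n) (Assume e') (qs n)) ->
    derives G (ps 0) (Iter C e e') qinf
| d_false : forall C q, asrtW q -> derives G aempty C q
| d_true : forall p C, asrtW p -> derives G p C Wall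
| d_scale : forall p C q u, derives G p C q ->
    derives G (aodot_l u p) C (aodot_l u q)
| d_disj : forall p1 p2 q1 q2 C, derives G p1 C q1 -> derives G p2 C q2 ->
    derives G (fun m => p1 m \/ p2 m) C (fun m => q1 m \/ q2 m)
| d_conj : forall p1 p2 q1 q2 C, derives G p1 C q1 -> derives G p2 C q2 ->
    derives G (fun m => p1 m /\ p2 m) C (fun m => q1 m /\ q2 m)
| d_choice : forall (T : Type) (p p' : T -> asrt) C,
    (forall t, derives G (p t) C (p' t)) ->
    derives G (bigoplus p) C (bigoplus p')
| d_exists : forall (T : Type) (p p' : T -> asrt) C,
    (forall t, derives G (p t) C (p' t)) ->
    derives G (aunion p) C (aunion p')
| d_conseq : forall p p' q q' C,
    (forall m, p' m -> p m) -> derives G p C q -> (forall m, q m -> q' m) ->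
    asrtW q' -> derives G p' C q'.

Definition Omega : triples :=
  fun p C q => (exists a, C = Atom a) /\ asrtW p /\ asrtW q /\ valid p C q.

End Programs.

From Stdlib Require Import List ClassicalEpsilon FunctionalExtensionality Permutation Lia.
Import ListNotations.
Set Implicit Arguments.
Unset Strict Implicit.

(* Every assertion is the union of the singletons {m} of its
   elements, and every weight is the sum m = ⊕_x m(x)·η(x); with (Exists),
   (Choice) and (Scale) it therefore suffices to derive {η x} C {[[C]](x)} for
   every state x.  This goes by induction on C: atomic actions are axioms of Ω,
   skip, assume and + are their own rules, and for C1; C2 the reduction above is
   applied to C2.  For C^<e,e'> apply (Iter) with φ_n the n-fold post of
   "assume e; C" from η x and ψ_n the post of "assume e'" from φ_n.  The N-th
   partial sum of the ψ_n is the N-th Kleene approximant Φ^N(0)(x), and by Scott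
   continuity the least fixed point of Φ is the supremum of these approximants,
   which is the convergence premise of (Iter). *)

Section PartialSemiring.
Variable A : PSemiring.
Local Notation U := (car A).
Local Notation add := (@padd A).
Local Notation mul := (@pmul A).
Local Notation zero := (pzero A).
Local Notation one := (pone A).
Local Notation le := (nle (@padd A)).

Lemma padd_0l (a : U) : add zero a = Some a.
Proof. rewrite padd_comm. apply padd_0r. Qed.

Lemma nle_refl (a : U) : le a a.
Proof. exists zero. apply padd_0r. Qed.

Lemma nle_trans (a b c : U) : le a b -> le b c -> le a c.
Proof.
  intros [w1 H1] [w2 H2]. destruct (padd_assoc H1 H2) as [w [_ Hw]].
  exists w; auto.
Qed.

Lemma zero_nle (a : U) : le zero a.
Proof. exists a. apply padd_0l. Qed.

Lemma nle_zero (a : U) : le a zero -> a = zero.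
Proof. intro H. apply nle_antisym; auto using zero_nle. Qed.

Lemma padd_assoc_inv (a b c bc abc : U) :
  add b c = Some bc -> add a bc = Some abc ->
  exists ab, add a b = Some ab /\ add ab c = Some abc.
Proof.
  intros H1 H2. rewrite padd_comm in H1, H2.
  destruct (padd_assoc H1 H2) as [w [Hw1 Hw2]].
  exists w. rewrite padd_comm. rewrite padd_comm in Hw2. auto.
Qed.

Lemma padd_swap (a b s t v : U) : add b s = Some t -> add a t = Some v ->
  exists t', add a s = Some t' /\ add b t' = Some v.
Proof.
  intros H1 H2. destruct (padd_assoc_inv H1 H2) as [ab [H3 H4]].
  rewrite padd_comm in H3. exact (padd_assoc H3 H4).
Qed.

Lemma padd_rearrange (a b c d ab cd s : U) :
  add a b = Some ab -> add c d = Some cd -> add ab cd = Some s ->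
  exists ac bd, add a c = Some ac /\ add b d = Some bd /\ add ac bd = Some s.
Proof.
  intros H1 H2 H3.
  destruct (padd_assoc H1 H3) as [bcd [H4 H5]].
  destruct (padd_swap H2 H4) as [bd [H6 H7]].
  destruct (padd_assoc_inv H7 H5) as [ac [H8 H9]].
  exists ac, bd. auto.
Qed.

Lemma padd_le_mono_l (a a' b c' : U) : le a a' -> add a' b = Some c' ->
  exists c, add a b = Some c /\ le c c'.
Proof.
  intros [w Hw] H. destruct (padd_assoc Hw H) as [wb [H1 H2]].
  rewrite padd_comm in H1. destruct (padd_assoc_inv H1 H2) as [ab [H3 H4]].
  exists ab. split; auto. exists w; auto.
Qed.

Lemma padd_le_mono (a a' b b' c' : U) : le a a' -> le b b' -> add a' b' = Some c' ->
  exists c, add a b = Some c /\ le c c'.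
Proof.
  intros Ha Hb H. destruct (padd_le_mono_l Ha H) as [c1 [H1 L1]].
  rewrite padd_comm in H1. destruct (padd_le_mono_l Hb H1) as [c2 [H2 L2]].
  exists c2. rewrite padd_comm. split; auto. eapply nle_trans; eauto.
Qed.

Lemma padd_le_compat (a a' b b' c c' : U) : le a a' -> le b b' ->
  add a' b' = Some c' -> add a b = Some c -> le c c'.
Proof.
  intros Ha Hb H Hc. destruct (padd_le_mono Ha Hb H) as [c0 [H0 L]].
  congruence.
Qed.

Lemma pmul_le_mono_l (u a b : U) : le a b -> le (mul u a) (mul u b).
Proof. intros [w Hw]. exists (mul u w). apply pmul_addr; auto. Qed.

Lemma trivial_of_one_eq_zero : one = zero -> forall a : U, a = zero.
Proof. intros H a. rewrite <- (pmul_1r a), H. apply pmul_0r. Qed.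

Lemma is_sup_unique (D : U -> Prop) s t : is_sup add D s -> is_sup add D t -> s = t.
Proof. intros [H1 H2] [H3 H4]. apply nle_antisym; auto. Qed.

Lemma is_sup_upper (D : U -> Prop) s d : is_sup add D s -> D d -> le d s.
Proof. intros [H _] Hd. auto. Qed.

Lemma is_sup_least (D : U -> Prop) s b : is_sup add D s ->
  (forall d, D d -> le d b) -> le s b.
Proof. intros [_ H] Hb. auto. Qed.

Lemma is_sup_ext (D D' : U -> Prop) s : (forall u, D u <-> D' u) ->
  is_sup add D s -> is_sup add D' s.
Proof.
  intros E [H1 H2]. split.
  - intros d Hd. apply H1, E, Hd.
  - intros b Hb. apply H2. intros d Hd. apply Hb, E, Hd.
Qed.

Lemma is_sup_cofinal (D D' : U -> Prop) s : is_sup add D s ->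
  (forall d, D d -> exists d', D' d' /\ le d d') -> (forall d', D' d' -> le d' s) ->
  is_sup add D' s.
Proof.
  intros [H1 H2] Hc Hu. split; auto.
  intros b Hb. apply H2. intros d Hd. destruct (Hc d Hd) as [d' [Hd' L]].
  eapply nle_trans; eauto.
Qed.

Lemma padd_sup_le (a b s : U) (D : U -> Prop) : directed add D -> is_sup add D s ->
  (forall d, D d -> exists v, add a d = Some v /\ le v b) ->
  exists v, add a s = Some v /\ le v b.
Proof.
  intros Dir Hs H. destruct (padd_cont (a := a) Dir Hs) as [v [Hv Sv]].
  { intros d Hd. destruct (H d Hd) as [v [Hv _]]. eauto. }
  exists v. split; auto. apply (is_sup_least Sv). intros w [d [Hd Hw]].
  destruct (H d Hd) as [v' [Hv' L]]. congruence.
Qed.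

Lemma padd_sup_le_offset (w z b s : U) (D : U -> Prop) : directed add D -> is_sup add D s ->
  (forall d, D d -> exists wd v, add w d = Some wd /\ add wd z = Some v /\ le v b) ->
  exists t v, add s z = Some t /\ add w t = Some v /\ le v b.
Proof.
  intros Dir Hs H. destruct (proj1 Dir) as [d0 Hd0].
  destruct (H d0 Hd0) as [wd0 [v0 [G1 [G2 _]]]]. rewrite padd_comm in G1.
  destruct (padd_assoc G1 G2) as [wz [Hwz _]].
  destruct (padd_sup_le (a := wz) (b := b) Dir Hs) as [v [Hv Lv]].
  { intros d Hd. destruct (H d Hd) as [wd [v [K1 [K2 K3]]]]. rewrite padd_comm in K1.
    destruct (padd_assoc K1 K2) as [wz' [K4 K5]]. rewrite Hwz in K4. injection K4 as <-.
    exists v. rewrite padd_comm. auto. }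
  destruct (padd_assoc Hwz Hv) as [t [T1 T2]].
  exists t, v. rewrite padd_comm. auto.
Qed.

Definition increasing (c : nat -> U) : Prop := forall n, le (c n) (c (S n)).

Definition sup_seq (c : nat -> U) (s : U) : Prop := is_sup add (fun u => exists n, u = c n) s.

Lemma increasing_le (c : nat -> U) : increasing c -> forall n m, n <= m -> le (c n) (c m).
Proof. intros H n m Hnm. induction Hnm; eauto using nle_refl, nle_trans. Qed.

Lemma increasing_directed (c : nat -> U) : increasing c ->
  directed add (fun u => exists n, u = c n).
Proof.
  intro H. split; [exists (c 0); eauto|].
  intros x y [n ->] [m ->]. exists (c (Nat.max n m)). split; eauto.
  split; apply increasing_le; auto; lia.
Qed.

Lemma sup_seq_exists (c : nat -> U) : increasing c -> exists s, sup_seq c s.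
Proof. intro H. exact (dir_sup (increasing_directed H)). Qed.

Lemma sup_seq_shift (c : nat -> U) s : increasing c -> sup_seq c s -> sup_seq (fun n => c (S n)) s.
Proof.
  intros Hc Hs. apply (is_sup_cofinal Hs).
  - intros d [n ->]. exists (c (S n)). split; eauto.
  - intros d [n ->]. apply (is_sup_upper Hs). eauto.
Qed.

Lemma sup_seq_pmul_l (a : U) (c : nat -> U) s : increasing c -> sup_seq c s ->
  sup_seq (fun n => mul a (c n)) (mul a s).
Proof.
  intros Hc Hs. eapply is_sup_ext; [|exact (pmul_contl a (increasing_directed Hc) Hs)].
  intro u. split.
  - intros [d [[n ->] ->]]. eauto.
  - intros [n ->]. eauto.
Qed.

End PartialSemiring.

Definition dec_eq {X : Type} (x y : X) : {x = y} + {x <> y} :=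
  excluded_middle_informative (x = y).

Definition lunion {X : Type} (l1 l2 : list X) : list X := nodup dec_eq (l1 ++ l2).

Lemma lunion_NoDup {X : Type} (l1 l2 : list X) : NoDup (lunion l1 l2).
Proof. apply NoDup_nodup. Qed.

Lemma in_lunion {X : Type} (l1 l2 : list X) x : In x (lunion l1 l2) <-> In x l1 \/ In x l2.
Proof. unfold lunion. rewrite nodup_In. apply in_app_iff. Qed.

Lemma incl_lunion_l {X : Type} (l1 l2 : list X) : incl l1 (lunion l1 l2).
Proof. intros x Hx. apply in_lunion. auto. Qed.

Lemma incl_lunion_r {X : Type} (l1 l2 : list X) : incl l2 (lunion l1 l2).
Proof. intros x Hx. apply in_lunion. auto. Qed.

Lemma nat_list_bound {Y : Type} (l : list Y) (g : Y -> nat) :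
  exists N, forall y, In y l -> g y < N.
Proof.
  induction l as [|x l [N HN]].
  - exists 0. intros n [].
  - exists (S (Nat.max (g x) N)). intros y [<-|H]; [|specialize (HN y H)]; lia.
Qed.

Section FiniteSums.
Variable A : PSemiring.
Local Notation U := (car A).
Local Notation add := (@padd A).
Local Notation mul := (@pmul A).
Local Notation zero := (pzero A).
Local Notation le := (nle (@padd A)).
Local Notation fsum := (@fsum A _).

Definition get_or_zero (o : option U) : U := match o with Some v => v | None => zero end.

Lemma fsum_cons_eq {X : Type} (x : X) l f :
  fsum (x :: l) f = match fsum l f with Some s => add (f x) s | None => None end.
Proof. reflexivity. Qed.

Lemma fsum_cons {X : Type} (x : X) l f v :
  fsum (x :: l) f = Some v <-> exists s, fsum l f = Some s /\ add (f x) s = Some v.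
Proof.
  rewrite fsum_cons_eq. destruct (fsum l f) as [s|]; split.
  - eauto.
  - intros [s' [[= <-] H]]. exact H.
  - discriminate.
  - intros [s' [[=] _]].
Qed.

Lemma fsum_one {X : Type} (x : X) f : fsum [x] f = Some (f x).
Proof. apply fsum_cons. exists zero. split; auto. apply padd_0r. Qed.

Lemma fsum_ext {X : Type} (l : list X) f g : (forall x, In x l -> f x = g x) ->
  fsum l f = fsum l g.
Proof.
  induction l as [|a l IH]; intro H; auto.
  rewrite !fsum_cons_eq, IH by (intros; apply H; simpl; auto).
  rewrite H by (simpl; auto). auto.
Qed.

Lemma fsum_map {X Y : Type} (g : X -> Y) l (F : Y -> U) :
  fsum (map g l) F = fsum l (fun x => F (g x)).
Proof. induction l as [|x l IH]; auto. simpl map. rewrite !fsum_cons_eq, IH. auto. Qed.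

Lemma fsum_seq_shift k N (F : nat -> U) :
  fsum (seq (S k) N) F = fsum (seq k N) (fun n => F (S n)).
Proof. rewrite <- seq_shift. apply fsum_map. Qed.

Lemma fsum_zero {X : Type} (l : list X) f : (forall x, In x l -> f x = zero) ->
  fsum l f = Some zero.
Proof.
  induction l as [|x l IH]; intro H; auto.
  apply fsum_cons. exists zero. split; [apply IH; intros; apply H; simpl; auto|].
  rewrite H by (simpl; auto). apply padd_0r.
Qed.

Lemma fsum_perm {X : Type} (l l' : list X) f : Permutation l l' -> fsum l f = fsum l' f.
Proof.
  intro P. induction P; try congruence.
  - rewrite !fsum_cons_eq, IHP. auto.
  - rewrite !fsum_cons_eq. destruct (fsum l f) as [s|]; auto.
    destruct (add (f x) s) as [t|] eqn:E1; destruct (add (f y) s) as [t'|] eqn:E2; auto.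
    + destruct (add (f y) t) as [v|] eqn:E3; destruct (add (f x) t') as [v'|] eqn:E4; auto;
        first [ destruct (padd_swap E1 E3) as [? [E5 E6]]
              | destruct (padd_swap E2 E4) as [? [E5 E6]] ]; congruence.
    + destruct (add (f y) t) as [v|] eqn:E3; auto.
      destruct (padd_swap E1 E3) as [? [E5 _]]. congruence.
    + destruct (add (f x) t') as [v|] eqn:E4; auto.
      destruct (padd_swap E2 E4) as [? [E5 _]]. congruence.
Qed.

Lemma fsum_le {X : Type} (l : list X) f g t : (forall x, In x l -> le (f x) (g x)) ->
  fsum l g = Some t -> exists s, fsum l f = Some s /\ le s t.
Proof.
  revert t. induction l as [|a l IH]; intros t Hle H.
  - exists zero. split; auto. apply zero_nle.
  - apply fsum_cons in H. destruct H as [s [H1 H2]].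
    destruct (IH s) as [s' [H3 H4]]; auto. { intros; apply Hle; simpl; auto. }
    destruct (padd_le_mono (Hle a (or_introl eq_refl)) H4 H2) as [c [H5 H6]].
    exists c. split; auto. apply fsum_cons. eauto.
Qed.

Lemma fsum_incl_le {X : Type} (l1 l2 : list X) f s2 : NoDup l1 -> NoDup l2 -> incl l1 l2 ->
  fsum l2 f = Some s2 -> exists s1, fsum l1 f = Some s1 /\ le s1 s2.
Proof.
  revert l2 s2. induction l1 as [|x l1 IH]; intros l2 s2 N1 N2 I H.
  - exists zero. split; auto. apply zero_nle.
  - destruct (in_split x l2) as [a [b ->]]. { apply I. simpl; auto. }
    rewrite (fsum_perm f (Permutation_sym (Permutation_middle a b x))) in H.
    apply fsum_cons in H. destruct H as [s [Hs Hx]].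
    inversion N1 as [|? ? Nx N1']; subst.
    destruct (IH (a ++ b) s) as [s1 [Hs1 L]]; auto.
    { exact (NoDup_remove_1 _ _ _ N2). }
    { intros y Hy. destruct (in_app_or _ _ _ (I y (or_intror Hy))) as [Hy'|[<-|Hy']];
        [apply in_or_app; auto | contradiction | apply in_or_app; auto]. }
    destruct (padd_le_mono (nle_refl (f x)) L Hx) as [c [Hc Lc]].
    exists c. split; auto. apply fsum_cons. eauto.
Qed.

Lemma fsum_elem_le {X : Type} (l : list X) f y s : NoDup l -> In y l ->
  fsum l f = Some s -> le (f y) s.
Proof.
  intros N I H. destruct (@fsum_incl_le X [y] l f s) as [s1 [H1 H2]]; auto.
  - repeat constructor. intros [].
  - intros z [<-|[]]; auto.
  - rewrite fsum_one in H1. congruence.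
Qed.

Lemma fsum_single {X : Type} (l : list X) f x0 : NoDup l ->
  (forall x, In x l -> x <> x0 -> f x = zero) ->
  fsum l f = Some (if excluded_middle_informative (In x0 l) then f x0 else zero).
Proof.
  induction l as [|x l IH]; intros N H.
  - simpl. destruct (excluded_middle_informative False); [contradiction|auto].
  - inversion N as [|? ? Nx Nl]; subst. apply fsum_cons.
    destruct (excluded_middle_informative (In x0 (x :: l))) as [Hin|Hin].
    + destruct (dec_eq x x0) as [<-|E].
      * exists zero. split; [|apply padd_0r].
        apply fsum_zero. intros y Hy. apply H; simpl; auto. intros ->; contradiction.
      * exists (f x0). rewrite (H x), padd_0l by (simpl; auto). split; auto.
        rewrite IH by (auto; intros; apply H; simpl; auto).
        destruct (excluded_middle_informative (In x0 l)); auto.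
        destruct Hin; [contradiction | tauto].
    + exists zero. rewrite (H x) by (simpl; auto; intros ->; simpl in Hin; tauto).
      split; [|apply padd_0r].
      rewrite IH by (auto; intros; apply H; simpl; auto).
      destruct (excluded_middle_informative (In x0 l)); auto. simpl in Hin; tauto.
Qed.

Lemma fsum_add {X : Type} (l : list X) f g h a b c :
  (forall x, In x l -> add (f x) (g x) = Some (h x)) ->
  fsum l f = Some a -> fsum l g = Some b -> add a b = Some c -> fsum l h = Some c.
Proof.
  revert a b c. induction l as [|x l IH]; intros a b c Hp Hf Hg Hc.
  - simpl in *. injection Hf; injection Hg; intros; subst.
    rewrite padd_0l in Hc. congruence.
  - apply fsum_cons in Hf as [sa [Ha1 Ha2]]. apply fsum_cons in Hg as [sb [Hb1 Hb2]].
    destruct (padd_rearrange Ha2 Hb2 Hc) as [ac [bd [H1 [H2 H3]]]].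
    apply fsum_cons. exists bd. split.
    + eapply IH; eauto. intros; apply Hp; simpl; auto.
    + rewrite Hp in H1 by (simpl; auto). congruence.
Qed.

Lemma fsum_pmul_l {X : Type} (l : list X) f u s : fsum l f = Some s ->
  fsum l (fun x => mul u (f x)) = Some (mul u s).
Proof.
  revert s. induction l as [|x l IH]; intros s H.
  - simpl in H |- *. injection H; intros; subst. rewrite pmul_0r. auto.
  - apply fsum_cons in H as [t [H1 H2]]. apply fsum_cons.
    exists (mul u t). split; auto. apply pmul_addr; auto.
Qed.

Lemma fsum_pmul_r {X : Type} (l : list X) f u s : fsum l f = Some s ->
  fsum l (fun x => mul (f x) u) = Some (mul s u).
Proof.
  revert s. induction l as [|x l IH]; intros s H.
  - simpl in H |- *. injection H; intros; subst. rewrite pmul_0l. auto.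
  - apply fsum_cons in H as [t [H1 H2]]. apply fsum_cons.
    exists (mul t u). split; auto. apply pmul_addl; auto.
Qed.

Lemma fsum_swap {X Y : Type} (lx : list X) (ly : list Y) (a : X -> Y -> U) r R : NoDup ly ->
  (forall x, In x lx -> fsum ly (a x) = Some (r x)) -> fsum lx r = Some R ->
  exists c, (forall y, In y ly -> fsum lx (fun x => a x y) = Some (c y)) /\ fsum ly c = Some R.
Proof.
  intro N. revert R. induction lx as [|x lx IH]; intros R Hr HR.
  - exists (fun _ => zero). split; [intros; reflexivity|].
    simpl in HR. injection HR; intros; subst. apply fsum_zero; auto.
  - apply fsum_cons in HR as [s [H1 H2]].
    destruct (IH s) as [c [Hc1 Hc2]]; auto. { intros; apply Hr; simpl; auto. }
    assert (Hax : fsum ly (a x) = Some (r x)) by (apply Hr; simpl; auto).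
    assert (Hd : forall y, In y ly ->
                   add (a x y) (c y) = Some (get_or_zero (add (a x y) (c y)))).
    { intros y Hy.
      destruct (padd_le_mono (fsum_elem_le N Hy Hax) (fsum_elem_le N Hy Hc2) H2) as [v [Hv _]].
      rewrite Hv. auto. }
    exists (fun y => get_or_zero (add (a x y) (c y))). split.
    + intros y Hy. apply fsum_cons. exists (c y). split; auto.
    + eapply fsum_add; eauto.
Qed.

End FiniteSums.

Lemma finite_sub_nil {X : Type} (I : X -> Prop) : finite_sub I [].
Proof. split; [constructor | intros x []]. Qed.

Lemma finite_sub_lunion {X : Type} (I : X -> Prop) l1 l2 :
  finite_sub I l1 -> finite_sub I l2 -> finite_sub I (lunion l1 l2).
Proof.
  intros [_ H1] [_ H2]. split; [apply lunion_NoDup|].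
  intros x Hx. apply in_lunion in Hx as [Hx|Hx]; auto.
Qed.

Lemma finite_sub_bigunion {X Y : Type} (I : X -> Prop) (ly : list Y) (L : Y -> list X) :
  (forall y, In y ly -> finite_sub I (L y)) ->
  exists lx, finite_sub I lx /\ forall y, In y ly -> incl (L y) lx.
Proof.
  induction ly as [|y ly IH]; intro H.
  - exists []. split; [apply finite_sub_nil | intros y []].
  - destruct IH as [lx [Hlx Hin]]. { intros; apply H; simpl; auto. }
    exists (lunion (L y) lx). split.
    + apply finite_sub_lunion; auto. apply H; simpl; auto.
    + intros y' [<-|Hy']; [apply incl_lunion_l|].
      intros x Hx. apply incl_lunion_r, (Hin y' Hy'), Hx.
Qed.

Section Sums.
Variable A : PSemiring.
Local Notation U := (car A).
Local Notation add := (@padd A).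
Local Notation mul := (@pmul A).
Local Notation zero := (pzero A).
Local Notation le := (nle (@padd A)).
Local Notation fsum := (@fsum A _).
Local Notation is_sum := (@is_sum A _).

Definition psums {X : Type} (I : X -> Prop) (f : X -> U) : U -> Prop :=
  fun v => exists l, finite_sub I l /\ fsum l f = Some v.

Lemma is_sum_defined {X : Type} (I : X -> Prop) f s : is_sum I f s ->
  forall l, finite_sub I l -> fsum l f <> None.
Proof. intros [H _]; auto. Qed.

Lemma is_sum_sup {X : Type} (I : X -> Prop) f s : is_sum I f s -> is_sup add (psums I f) s.
Proof. intros [_ H]; auto. Qed.

Lemma is_sum_le {X : Type} (I : X -> Prop) f s l : is_sum I f s -> finite_sub I l ->
  exists v, fsum l f = Some v /\ le v s.
Proof.
  intros [H1 H2] Hl. destruct (fsum l f) as [v|] eqn:E.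
  - exists v. split; auto. apply H2. exists l; auto.
  - exfalso. exact (H1 l Hl E).
Qed.

Lemma is_sum_least {X : Type} (I : X -> Prop) f s b : is_sum I f s ->
  (forall l v, finite_sub I l -> fsum l f = Some v -> le v b) -> le s b.
Proof. intros [_ H2] Hb. apply H2. intros d [l [Hl Hd]]. eauto. Qed.

Lemma is_sum_intro {X : Type} (I : X -> Prop) f s :
  (forall l, finite_sub I l -> exists v, fsum l f = Some v /\ le v s) ->
  (forall b, (forall l v, finite_sub I l -> fsum l f = Some v -> le v b) -> le s b) ->
  is_sum I f s.
Proof.
  intros H1 H2. split; [|split].
  - intros l Hl E. destruct (H1 l Hl) as [v [Hv _]]. congruence.
  - intros d [l [Hl Hd]]. destruct (H1 l Hl) as [v [Hv L]]. congruence.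
  - intros b Hb. apply H2. intros l v Hl Hv. apply Hb. exists l; auto.
Qed.

Lemma is_sum_unique {X : Type} (I : X -> Prop) f s t : is_sum I f s -> is_sum I f t -> s = t.
Proof. intros [_ H1] [_ H2]. eapply is_sup_unique; eauto. Qed.

Lemma is_sum_ext {X : Type} (I : X -> Prop) f g s : (forall x, I x -> f x = g x) ->
  is_sum I f s -> is_sum I g s.
Proof.
  intros E H.
  assert (Efg : forall l, finite_sub I l -> fsum l f = fsum l g).
  { intros l Hl. apply fsum_ext. intros; apply E, Hl; auto. }
  apply is_sum_intro.
  - intros l Hl. rewrite <- Efg by auto. exact (is_sum_le H Hl).
  - intros b Hb. apply (is_sum_least H). intros l v Hl Hv.
    apply (Hb l v Hl). rewrite <- Efg; auto.
Qed.

Lemma psums_directed {X : Type} (I : X -> Prop) f :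
  (forall l, finite_sub I l -> fsum l f <> None) -> directed add (psums I f).
Proof.
  intro H. split; [exists zero, []; split; auto using finite_sub_nil|].
  intros x y [l1 [Hl1 Hx]] [l2 [Hl2 Hy]].
  pose proof (finite_sub_lunion Hl1 Hl2) as Hl3.
  destruct (fsum (lunion l1 l2) f) as [z|] eqn:E; [|exfalso; eapply H; eauto].
  exists z. split; [exists (lunion l1 l2); auto|].
  destruct Hl1 as [N1 _], Hl2 as [N2 _], Hl3 as [N3 _]. split.
  - destruct (fsum_incl_le N1 N3 (@incl_lunion_l _ l1 l2) E) as [s1 [E1 L]]. congruence.
  - destruct (fsum_incl_le N2 N3 (@incl_lunion_r _ l1 l2) E) as [s1 [E1 L]]. congruence.
Qed.

Lemma is_sum_dominated {X : Type} (I : X -> Prop) f g t :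
  (forall x, I x -> le (f x) (g x)) -> is_sum I g t -> exists s, is_sum I f s /\ le s t.
Proof.
  intros Hle H.
  assert (Hf : forall l, finite_sub I l -> exists v, fsum l f = Some v /\ le v t).
  { intros l Hl. destruct (is_sum_le H Hl) as [v [Hv L]].
    destruct (fsum_le (f := f) (fun x Hx => Hle x (proj2 Hl x Hx)) Hv) as [s [Hs Ls]].
    exists s; split; eauto using nle_trans. }
  assert (Hd : forall l, finite_sub I l -> fsum l f <> None).
  { intros l Hl E. destruct (Hf l Hl) as [v [Hv _]]. congruence. }
  destruct (dir_sup (psums_directed Hd)) as [s Hs].
  exists s. split; [split; auto|].
  apply (is_sup_least Hs). intros d [l [Hl Hv]]. destruct (Hf l Hl) as [v [Hv' L]]. congruence.
Qed.

Lemma is_sum_le_mono {X : Type} (I : X -> Prop) f g s t :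
  (forall x, I x -> le (f x) (g x)) -> is_sum I f s -> is_sum I g t -> le s t.
Proof.
  intros Hle Hf Hg. destruct (is_sum_dominated Hle Hg) as [s' [Hs' L]].
  rewrite (is_sum_unique Hf Hs'). auto.
Qed.

Lemma is_sum_elem_le {X : Type} (I : X -> Prop) f s x : is_sum I f s -> I x -> le (f x) s.
Proof.
  intros H Hx. destruct (is_sum_le (l := [x]) H) as [v [Hv L]].
  - split; [repeat constructor; intros []|]. intros y [<-|[]]; auto.
  - rewrite fsum_one in Hv. congruence.
Qed.

Definition in_pred {X : Type} (P : X -> Prop) (x : X) : bool :=
  if excluded_middle_informative (P x) then true else false.

Lemma fsum_filter_zero {X : Type} (P : X -> Prop) l f :
  (forall x, In x l -> ~ P x -> f x = zero) -> fsum l f = fsum (filter (in_pred P) l) f.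
Proof.
  induction l as [|x l IH]; intro H; auto.
  simpl filter. unfold in_pred at 1.
  destruct (excluded_middle_informative (P x)) as [p|p].
  - rewrite !fsum_cons_eq, IH; auto. intros; apply H; simpl; auto.
  - rewrite fsum_cons_eq, <- IH by (intros; apply H; simpl; auto).
    rewrite H by (simpl; auto). destruct (fsum l f); auto. apply padd_0l.
Qed.

Lemma is_sum_restrict {X : Type} (I J : X -> Prop) f s : (forall x, I x -> J x) ->
  (forall x, J x -> ~ I x -> f x = zero) -> (is_sum J f s <-> is_sum I f s).
Proof.
  intros HIJ Hz.
  assert (Hf : forall l, finite_sub J l -> finite_sub I (filter (in_pred I) l) /\
            fsum l f = fsum (filter (in_pred I) l) f).
  { intros l [N Hl]. split; [split|].
    - apply NoDup_filter; auto.
    - intros x Hx. apply filter_In in Hx as [_ Hx]. unfold in_pred in Hx.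
      destruct (excluded_middle_informative (I x)); congruence.
    - apply fsum_filter_zero. intros; apply Hz; auto. }
  assert (Hg : forall l, finite_sub I l -> finite_sub J l).
  { intros l [N Hl]; split; auto. }
  split; intro H; apply is_sum_intro.
  - intros l Hl. exact (is_sum_le H (Hg l Hl)).
  - intros b Hb. apply (is_sum_least H). intros l v Hl Hv.
    destruct (Hf l Hl) as [H1 H2]. apply (Hb _ v H1). congruence.
  - intros l Hl. destruct (Hf l Hl) as [H1 ->]. exact (is_sum_le H H1).
  - intros b Hb. apply (is_sum_least H). intros l v Hl Hv. exact (Hb l v (Hg l Hl) Hv).
Qed.

Lemma is_sum_single {X : Type} (I : X -> Prop) f x0 :
  (forall x, I x -> x <> x0 -> f x = zero) -> (I x0 \/ f x0 = zero) -> is_sum I f (f x0).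
Proof.
  intros Hz Hx0. apply is_sum_intro.
  - intros l [N Hl]. rewrite (fsum_single (x0 := x0)); auto.
    eexists; split; eauto.
    destruct (excluded_middle_informative (In x0 l)); [apply nle_refl | apply zero_nle].
  - intros b Hb. destruct Hx0 as [Hx0 | ->]; [|apply zero_nle].
    apply (Hb [x0]); [|apply fsum_one].
    split; [repeat constructor; intros []|]. intros x [<-|[]]; auto.
Qed.

Lemma is_sum_empty {X : Type} (I : X -> Prop) f s : (forall x, ~ I x) ->
  (is_sum I f s <-> s = zero).
Proof.
  intro He.
  assert (H0 : is_sum I f zero).
  { apply is_sum_intro.
    - intros [|x l] [_ Hl]; [exists zero; split; auto using nle_refl|].
      exfalso. apply (He x), Hl. simpl; auto.
    - intros b Hb. apply (Hb []); auto using finite_sub_nil. }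
  split; intro H; [eapply is_sum_unique|subst]; eauto.
Qed.

Lemma is_sum_zero {X : Type} (I : X -> Prop) : is_sum I (fun _ => zero) zero.
Proof.
  apply is_sum_intro.
  - intros l _. exists zero. split; [apply fsum_zero; auto | apply nle_refl].
  - intros b _. apply zero_nle.
Qed.

Lemma is_sum_pmul_l {X : Type} (I : X -> Prop) f s u : is_sum I f s ->
  is_sum I (fun x => mul u (f x)) (mul u s).
Proof.
  intro H. split.
  - intros l Hl. destruct (is_sum_le H Hl) as [v [Hv _]].
    rewrite (fsum_pmul_l u Hv). discriminate.
  - eapply is_sup_ext;
      [|exact (pmul_contl u (psums_directed (is_sum_defined H)) (is_sum_sup H))].
    intro w. split.
    + intros [d [[l [Hl Hd]] ->]]. exists l. split; auto. apply fsum_pmul_l; auto.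
    + intros [l [Hl Hw]]. destruct (is_sum_le H Hl) as [v [Hv _]].
      exists v. split; [exists l; auto|]. rewrite (fsum_pmul_l u Hv) in Hw. congruence.
Qed.

Lemma is_sum_pmul_r {X : Type} (I : X -> Prop) f s u : is_sum I f s ->
  is_sum I (fun x => mul (f x) u) (mul s u).
Proof.
  intro H. split.
  - intros l Hl. destruct (is_sum_le H Hl) as [v [Hv _]].
    rewrite (fsum_pmul_r u Hv). discriminate.
  - eapply is_sup_ext;
      [|exact (pmul_contr u (psums_directed (is_sum_defined H)) (is_sum_sup H))].
    intro w. split.
    + intros [d [[l [Hl Hd]] ->]]. exists l. split; auto. apply fsum_pmul_r; auto.
    + intros [l [Hl Hw]]. destruct (is_sum_le H Hl) as [v [Hv _]].
      exists v. split; [exists l; auto|]. rewrite (fsum_pmul_r u Hv) in Hw. congruence.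
Qed.

Lemma padd_sup2_le (D1 D2 : U -> Prop) s1 s2 c b : directed add D1 -> directed add D2 ->
  is_sup add D1 s1 -> is_sup add D2 s2 -> add s1 s2 = Some c ->
  (forall d1 d2, D1 d1 -> D2 d2 -> exists v, add d1 d2 = Some v /\ le v b) -> le c b.
Proof.
  intros Dir1 Dir2 S1 S2 Hc H.
  destruct (padd_sup_le (a := s2) (b := b) Dir1 S1) as [v [Hv L]].
  - intros d1 Hd1. destruct (padd_sup_le (a := d1) (b := b) Dir2 S2) as [v [Hv L]].
    + intros d2 Hd2. exact (H d1 d2 Hd1 Hd2).
    + exists v. rewrite padd_comm. auto.
  - rewrite padd_comm, Hc in Hv. congruence.
Qed.

Lemma is_sum_add {X : Type} (I : X -> Prop) f g h a b c : is_sum I f a -> is_sum I g b ->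
  add a b = Some c -> (forall x, I x -> add (f x) (g x) = Some (h x)) -> is_sum I h c.
Proof.
  intros Hf Hg Hc Hp.
  assert (Hl : forall l, finite_sub I l -> exists va vb v, fsum l f = Some va /\
              fsum l g = Some vb /\ add va vb = Some v /\ fsum l h = Some v /\ le v c).
  { intros l Hl. destruct (is_sum_le Hf Hl) as [va [Ha La]].
    destruct (is_sum_le Hg Hl) as [vb [Hb Lb]].
    destruct (padd_le_mono La Lb Hc) as [v [Hv L]].
    exists va, vb, v. repeat split; auto.
    apply (fsum_add (f := f) (g := g) (fun x Hx => Hp x (proj2 Hl x Hx)) Ha Hb Hv). }
  apply is_sum_intro.
  - intros l Hl'. destruct (Hl l Hl') as [va [vb [v [_ [_ [_ [Hv L]]]]]]]. eauto.
  - intros b' Hb'.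
    apply (padd_sup2_le (psums_directed (is_sum_defined Hf)) (psums_directed (is_sum_defined Hg))
             (is_sum_sup Hf) (is_sum_sup Hg) Hc).
    intros d1 d2 [l1 [Hl1 H1]] [l2 [Hl2 H2]].
    pose proof (finite_sub_lunion Hl1 Hl2) as Hl3.
    destruct (Hl _ Hl3) as [va [vb [v [Ha [Hb [Hv [Hh _]]]]]]].
    destruct Hl1 as [N1 _], Hl2 as [N2 _]. pose proof (proj1 Hl3) as N3.
    destruct (fsum_incl_le N1 N3 (@incl_lunion_l _ l1 l2) Ha) as [s1 [E1 L1]].
    destruct (fsum_incl_le N2 N3 (@incl_lunion_r _ l1 l2) Hb) as [s2 [E2 L2]].
    rewrite E1 in H1; rewrite E2 in H2. injection H1 as ->. injection H2 as ->.
    destruct (padd_le_mono L1 L2 Hv) as [w [Hw Lw]]. exists w. split; auto.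
    eapply nle_trans; [exact Lw|]. exact (Hb' (lunion l1 l2) v Hl3 Hh).
Qed.

End Sums.

Section Interchange.
Variable A : PSemiring.
Local Notation U := (car A).
Local Notation add := (@padd A).
Local Notation zero := (pzero A).
Local Notation le := (nle (@padd A)).
Local Notation fsum := (@fsum A _).
Local Notation is_sum := (@is_sum A _).

(* The offset [w] makes the induction go through: the head summand is absorbed
   into it while the tail is passed to its supremum. *)
Lemma fsum_sup_le_offset {Y : Type} (D : Y -> U -> Prop) (c : Y -> U) (l : list Y) :
  NoDup l -> (forall y, In y l -> directed add (D y) /\ is_sup add (D y) (c y)) ->
  forall w b, (forall ch, (forall y, In y l -> D y (ch y)) ->
     exists z v, fsum l ch = Some z /\ add w z = Some v /\ le v b) ->
  exists z v, fsum l c = Some z /\ add w z = Some v /\ le v b.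
Proof.
  induction l as [|y l IH]; intros N Hd w b H.
  - apply H. intros y [].
  - inversion N as [|? ? Ny Nl]; subst.
    set (upd := fun (ch : Y -> U) d y' => if dec_eq y' y then d else ch y').
    assert (Step : forall d, D y d -> exists wd, add w d = Some wd /\
               exists z v, fsum l c = Some z /\ add wd z = Some v /\ le v b).
    { intros d Hdd.
      assert (Hch : forall ch, (forall y', In y' l -> D y' (ch y')) ->
                exists wd z v, add w d = Some wd /\ fsum l ch = Some z /\
                               add wd z = Some v /\ le v b).
      { intros ch Hc. destruct (H (upd ch d)) as [z [v [E1 [E2 E3]]]].
        - intros y' Hy'. unfold upd. destruct (dec_eq y' y) as [->|Ne]; auto.
          destruct Hy'; [congruence | auto].
        - apply fsum_cons in E1 as [s [E4 E5]].
          unfold upd in E5. destruct (dec_eq y y); [|congruence].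
          rewrite (fsum_ext (g := ch)) in E4.
          2: { intros x Hx. unfold upd. destruct (dec_eq x y); [subst; contradiction | auto]. }
          destruct (padd_assoc_inv E5 E2) as [wd [E6 E7]]. exists wd, s, v. auto. }
      destruct (Hch (fun y' => epsilon (inhabits zero) (D y'))) as [wd [_ [_ [Hwd _]]]].
      { intros y' Hy'. apply epsilon_spec, (Hd y' (or_intror Hy')). }
      exists wd. split; auto.
      apply IH; auto. { intros; apply Hd; simpl; auto. }
      intros ch Hc. destruct (Hch ch Hc) as [wd' [z [v [Hwd' R]]]].
      rewrite Hwd in Hwd'. injection Hwd' as <-. eauto. }
    destruct (Hd y (or_introl eq_refl)) as [Dir Hsup].
    destruct (proj1 Dir) as [d0 Hd0].
    destruct (Step d0 Hd0) as [_ [_ [Z [_ [HZ _]]]]].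
    destruct (padd_sup_le_offset (w := w) (z := Z) (b := b) Dir Hsup) as [t [v [T1 [T2 Lv]]]].
    { intros d Hdd. destruct (Step d Hdd) as [wd [K1 [Z' [v [K2 [K3 K4]]]]]].
      rewrite HZ in K2. injection K2 as <-. eauto. }
    exists t, v. repeat split; auto. apply fsum_cons. eauto.
Qed.

Lemma fsum_sup_le {Y : Type} (D : Y -> U -> Prop) (c : Y -> U) (l : list Y) b :
  NoDup l -> (forall y, In y l -> directed add (D y) /\ is_sup add (D y) (c y)) ->
  (forall ch, (forall y, In y l -> D y (ch y)) -> exists z, fsum l ch = Some z /\ le z b) ->
  exists z, fsum l c = Some z /\ le z b.
Proof.
  intros N Hd H.
  destruct (fsum_sup_le_offset N Hd (w := zero) (b := b)) as [z [v [E1 [E2 E3]]]].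
  - intros ch Hc. destruct (H ch Hc) as [z [Hz Lz]]. exists z, z. rewrite padd_0l. auto.
  - rewrite padd_0l in E2. injection E2 as ->. eauto.
Qed.

Lemma fsum_of_sums_le {X Y : Type} (I : X -> Prop) (a : X -> Y -> U) (c : Y -> U) ly B :
  NoDup ly -> (forall y, In y ly -> is_sum I (fun x => a x y) (c y)) ->
  (forall lx, finite_sub I lx -> exists r T, (forall x, In x lx -> fsum ly (a x) = Some (r x)) /\
                                        fsum lx r = Some T /\ le T B) ->
  exists z, fsum ly c = Some z /\ le z B.
Proof.
  intros Nly Hc H.
  apply (fsum_sup_le (D := fun y => psums I (fun x => a x y))); auto.
  { intros y Hy. split.
    - apply psums_directed, (is_sum_defined (Hc y Hy)).
    - apply is_sum_sup, Hc, Hy. }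
  intros ch Hch.
  set (L := fun y => epsilon (inhabits (@nil X))
              (fun lx => finite_sub I lx /\ fsum lx (fun x => a x y) = Some (ch y))).
  assert (HL : forall y, In y ly ->
                 finite_sub I (L y) /\ fsum (L y) (fun x => a x y) = Some (ch y)).
  { intros y Hy. apply epsilon_spec, Hch, Hy. }
  destruct (finite_sub_bigunion (I := I) (ly := ly) (L := L)) as [lx [Hlx Hinc]].
  { intros; apply HL; auto. }
  destruct (H lx Hlx) as [r [T [Hr [HT LT]]]].
  destruct (fsum_swap Nly Hr HT) as [c' [Hc'1 Hc'2]].
  destruct (fsum_le (f := ch) (g := c') (l := ly) (t := T)) as [z [Hz Lz]]; auto.
  - intros y Hy. destruct (HL y Hy) as [[NL _] HL2].
    destruct (fsum_incl_le NL (proj1 Hlx) (Hinc y Hy) (Hc'1 y Hy)) as [s1 [Hs1 Ls1]].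
    congruence.
  - exists z. split; eauto using nle_trans.
Qed.

Lemma fubini {X Y : Type} (I : X -> Prop) (J : Y -> Prop) (a : X -> Y -> U) r R :
  (forall x, I x -> is_sum J (a x) (r x)) -> is_sum I r R ->
  exists c, (forall y, J y -> is_sum I (fun x => a x y) (c y)) /\ is_sum J c R.
Proof.
  intros Hr HR.
  set (c := fun y => epsilon (inhabits zero) (is_sum I (fun x => a x y))).
  assert (Hc : forall y, J y -> is_sum I (fun x => a x y) (c y)).
  { intros y Hy. apply epsilon_spec.
    destruct (is_sum_dominated (f := fun x => a x y) (fun x Hx => is_sum_elem_le (Hr x Hx) Hy) HR)
      as [s [Hs _]]. eauto. }
  assert (Bound : forall ly, finite_sub J ly -> exists z, fsum ly c = Some z /\ le z R).
  { intros ly [Nly Hly]. apply (fsum_of_sums_le (I := I) (a := a)); auto.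
    intros lx Hlx.
    set (r' := fun x => get_or_zero (fsum ly (a x))).
    assert (Hr' : forall x, In x lx -> fsum ly (a x) = Some (r' x) /\ le (r' x) (r x)).
    { intros x Hx. destruct (is_sum_le (Hr x (proj2 Hlx x Hx)) (conj Nly Hly)) as [v [Hv Lv]].
      unfold r'. rewrite Hv. auto. }
    destruct (is_sum_le HR Hlx) as [T1 [HT1 LT1]].
    destruct (fsum_le (f := r') (fun x Hx => proj2 (Hr' x Hx)) HT1) as [T0 [HT0 LT0]].
    exists r', T0. repeat split; eauto using nle_trans. intros; apply Hr'; auto. }
  exists c. split; auto. apply is_sum_intro; auto.
  intros b Hb. apply (is_sum_least HR). intros lx v [Nlx Hlx] Hv.
  destruct (fsum_of_sums_le (I := J) (a := fun y x => a x y) (c := r) (ly := lx) (B := b) Nlx)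
    as [z [Hz Lz]].
  - intros x Hx. apply Hr, Hlx, Hx.
  - intros ly Hly.
    set (s := fun y => get_or_zero (fsum lx (fun x => a x y))).
    assert (Hs : forall y, In y ly -> fsum lx (fun x => a x y) = Some (s y) /\ le (s y) (c y)).
    { intros y Hy. destruct (is_sum_le (Hc y (proj2 Hly y Hy)) (conj Nlx Hlx)) as [v0 [Hv0 Lv0]].
      unfold s; rewrite Hv0; auto. }
    destruct (Bound ly Hly) as [Tc [HTc LTc]].
    destruct (fsum_le (f := s) (fun y Hy => proj2 (Hs y Hy)) HTc) as [T0 [HT0 LT0]].
    exists s, T0. repeat split; [intros; apply Hs; auto | auto |].
    eapply nle_trans; [exact LT0 | exact (Hb ly Tc Hly HTc)].
  - congruence.
Qed.

Lemma is_sum_sup_seq {X : Type} (I : X -> Prop) (a : nat -> X -> U) (f : X -> U) B s :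
  (forall x, I x -> increasing (fun n => a n x)) -> (forall n, is_sum I (a n) (B n)) ->
  (forall x, I x -> sup_seq (fun n => a n x) (f x)) -> sup_seq B s -> is_sum I f s.
Proof.
  intros Hmono HB Hf Hs.
  assert (Bound : forall l, finite_sub I l -> exists v, fsum l f = Some v /\ le v s).
  { intros l [Nl Hl]. apply (fsum_sup_le (D := fun x u => exists n, u = a n x)); auto.
    { intros x Hx. split; [apply increasing_directed, Hmono | apply Hf]; auto. }
    intros ch Hch.
    set (idx := fun x => epsilon (inhabits 0) (fun n => ch x = a n x)).
    assert (Hidx : forall x, In x l -> ch x = a (idx x) x).
    { intros x Hx. exact (epsilon_spec (inhabits 0) (fun n => ch x = a n x) (Hch x Hx)). }
    destruct (nat_list_bound l idx) as [N HN].
    destruct (is_sum_le (HB N) (conj Nl Hl)) as [vN [HvN LvN]].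
    destruct (fsum_le (l := l) (f := ch) (g := a N) (t := vN)) as [z [Hz Lz]]; auto.
    - intros x Hx. rewrite Hidx by auto.
      apply (increasing_le (c := fun n => a n x)); [apply Hmono; auto | specialize (HN x Hx); lia].
    - exists z. split; auto. eapply nle_trans; [eassumption|].
      eapply nle_trans; [eassumption | apply (is_sup_upper Hs); eauto]. }
  apply is_sum_intro; auto.
  intros b Hb. apply (is_sup_least Hs). intros u [n ->].
  apply (is_sum_least (HB n)). intros l v Hl Hv.
  destruct (Bound l Hl) as [w [Hw _]].
  destruct (fsum_le (l := l) (f := a n) (g := f) (t := w)) as [v' [Hv' Lv']]; auto.
  - intros x Hx. apply (is_sup_upper (Hf x (proj2 Hl x Hx))). eauto.
  - rewrite Hv in Hv'. injection Hv' as <-. eapply nle_trans; eauto.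
Qed.

Lemma is_sum_nat_sup_seq (q : nat -> U) s (Q : nat -> U) : is_sum (fun _ => True) q s ->
  (forall N, fsum (seq 0 N) q = Some (Q N)) -> sup_seq Q s.
Proof.
  intros H HQ. apply (is_sup_cofinal (is_sum_sup H)).
  - intros d [l [[Nl _] Hd]]. destruct (nat_list_bound l (fun n => n)) as [N HN].
    destruct (fsum_incl_le (f := q) (l2 := seq 0 N) Nl (seq_NoDup N 0) (s2 := Q N))
      as [s1 [Hs1 Ls1]]; auto.
    { intros n Hn. apply in_seq. specialize (HN n Hn). lia. }
    exists (Q N). split; eauto. congruence.
  - intros d' [N ->]. destruct (is_sum_le (l := seq 0 N) H) as [v [Hv L]].
    + split; [apply seq_NoDup | auto].
    + rewrite HQ in Hv. congruence.
Qed.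

End Interchange.

Section Weights.
Variable A : PSemiring.
Local Notation U := (car A).
Local Notation mul := (@pmul A).
Local Notation zero := (pzero A).
Local Notation one := (pone A).
Local Notation le := (nle (@padd A)).
Local Notation is_sum := (@is_sum A _).

Lemma not_supp_zero {X : Type} (m : X -> U) x : ~ supp m x -> m x = zero.
Proof. unfold supp. intro H. destruct (excluded_middle_informative (m x = zero)); tauto. Qed.

Lemma is_sum_supp {X : Type} (m f : X -> U) s : (forall x, ~ supp m x -> f x = zero) ->
  (is_sum (fun _ => True) f s <-> is_sum (supp m) f s).
Proof. intro H. apply is_sum_restrict; auto. Qed.

Lemma weight_mass {X : Type} (m : X -> U) : is_weight m -> exists s, is_sum (fun _ => True) m s.
Proof.
  intros [_ [s Hs]]. exists s. apply (is_sum_supp (m := m)); auto using not_supp_zero.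
Qed.

Lemma is_weight_intro {X : Type} (m : X -> U) s : countable (supp m) ->
  is_sum (fun _ => True) m s -> is_weight m.
Proof.
  intros Hc Hs. split; auto. exists s. apply (is_sum_supp (m := m)); auto using not_supp_zero.
Qed.

Lemma countable_subset {X : Type} (P Q : X -> Prop) : (forall x, P x -> Q x) ->
  countable Q -> countable P.
Proof. intros H [h Hh]. exists h. intros; apply Hh; auto. Qed.

Lemma is_weight_zero {X : Type} : is_weight (fun _ : X => zero).
Proof.
  apply is_weight_intro with zero; [|apply is_sum_zero].
  exists (fun _ => 0). intros x y Hx. exfalso. apply Hx; auto.
Qed.

Lemma is_weight_le {X : Type} (m1 m2 : X -> U) : (forall y, le (m1 y) (m2 y)) ->
  is_weight m2 -> is_weight m1.
Proof.
  intros Hle Hw. destruct (weight_mass Hw) as [s Hs].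
  destruct (is_sum_dominated (f := m1) (fun x _ => Hle x) Hs) as [s1 [Hs1 _]].
  apply is_weight_intro with s1; auto.
  apply countable_subset with (supp m2); [|apply Hw].
  intros x Hx E. apply Hx, nle_zero. rewrite <- E. auto.
Qed.

Lemma is_weight_lscale {X : Type} u (m : X -> U) : is_weight m -> is_weight (lscale u m).
Proof.
  intros Hw. destruct (weight_mass Hw) as [s Hs].
  apply is_weight_intro with (mul u s); [|apply is_sum_pmul_l; auto].
  apply countable_subset with (supp m); [|apply Hw].
  intros x Hx E. apply Hx. unfold lscale. rewrite E. apply pmul_0r.
Qed.

Lemma lscale_0 {X : Type} (m : X -> U) : lscale zero m = fun _ => zero.
Proof. apply functional_extensionality. intro. apply pmul_0l. Qed.

Lemma eta_neq {X : Type} (x y : X) : x <> y -> eta A x y = zero.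
Proof. intro H. unfold eta. destruct (excluded_middle_informative (x = y)); tauto. Qed.

Lemma eta_refl {X : Type} (x : X) : eta A x x = one.
Proof. unfold eta. destruct (excluded_middle_informative (x = x)); tauto. Qed.

Lemma supp_eta {X : Type} (x y : X) : supp (eta A x) y -> y = x.
Proof. intro H. destruct (dec_eq y x); auto. exfalso. apply H, eta_neq. auto. Qed.

Lemma is_sum_eta_l {X : Type} (x : X) (f : X -> U) :
  is_sum (fun _ => True) (fun y => mul (eta A x y) (f y)) (f x).
Proof.
  rewrite <- (pmul_1l (f x)). rewrite <- (eta_refl x).
  apply (is_sum_single (f := fun y => mul (eta A x y) (f y)) (x0 := x)); auto.
  intros y _ Hy. rewrite eta_neq by auto. apply pmul_0l.
Qed.

Lemma is_sum_eta_r {X : Type} (x : X) (f : X -> U) :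
  is_sum (fun _ => True) (fun y => mul (f y) (eta A y x)) (f x).
Proof.
  rewrite <- (pmul_1r (f x)). rewrite <- (eta_refl x).
  apply (is_sum_single (f := fun y => mul (f y) (eta A y x)) (x0 := x)); auto.
  intros y _ Hy. rewrite eta_neq by auto. apply pmul_0r.
Qed.

Lemma is_weight_eta {X : Type} (x : X) : is_weight (eta A x).
Proof.
  apply is_weight_intro with one.
  - exists (fun _ => 0). intros y z Hy Hz _. rewrite (supp_eta Hy), (supp_eta Hz). auto.
  - rewrite <- (eta_refl x). apply (is_sum_single (f := eta A x) (x0 := x)); auto.
    intros y _ Hy. apply eta_neq. auto.
Qed.

Lemma lscale_eta {X : Type} (u : U) (x : X) : lscale u (eta A x) = rscale (eta A x) u.
Proof.
  apply functional_extensionality. intro y. unfold rscale, lscale.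
  destruct (dec_eq x y) as [<-|N].
  - rewrite eta_refl, pmul_1l, pmul_1r. auto.
  - rewrite eta_neq by auto. rewrite pmul_0l, pmul_0r. auto.
Qed.


Lemma bind_total {X Y : Type} (F : X -> (Y -> U) -> Prop) m m' :
  bind F m m' <-> exists g, (forall x, supp m x -> F x (g x)) /\
     (forall y, is_sum (fun _ => True) (fun x => mul (m x) (g x y)) (m' y)) /\ is_weight m'.
Proof.
  assert (E : forall (g : X -> Y -> U) y s,
             is_sum (fun _ => True) (fun x => mul (m x) (g x y)) s <->
                            is_sum (supp m) (fun x => mul (m x) (g x y)) s).
  { intros g y s. apply is_sum_supp. intros x Hx. rewrite (not_supp_zero Hx). apply pmul_0l. }
  split; intros [g [H1 [H2 H3]]]; exists g; (split; [|split]); auto; intro y0; apply E; auto.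
Qed.

Lemma bind_det {X Y : Type} (F : X -> (Y -> U) -> Prop) m r1 r2 :
  (forall x r r', F x r -> F x r' -> r = r') -> bind F m r1 -> bind F m r2 -> r1 = r2.
Proof.
  intros Hd H1 H2. apply bind_total in H1 as [g [Hg1 [Hg2 _]]], H2 as [g' [Hg1' [Hg2' _]]].
  apply functional_extensionality. intro y.
  eapply is_sum_unique; [apply Hg2|].
  eapply is_sum_ext; [|exact (Hg2' y)]. intros x _. simpl.
  destruct (excluded_middle_informative (supp m x)) as [Hx|Hx].
  - rewrite (Hd x (g' x) (g x)); auto.
  - rewrite (not_supp_zero Hx), !pmul_0l. auto.
Qed.

Lemma bind_eta {X Y : Type} (F : X -> (Y -> U) -> Prop) x m' : one <> zero ->
  bind F (eta A x) m' -> F x m'.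
Proof.
  intros N H. apply bind_total in H as [g [H1 [H2 _]]].
  replace m' with (g x).
  - apply H1. unfold supp. rewrite eta_refl. auto.
  - apply functional_extensionality. intro y.
    exact (is_sum_unique (is_sum_eta_l x (fun x' => g x' y)) (H2 y)).
Qed.

Lemma wadd_det {X : Type} (m1 m2 r r' : X -> U) : wadd m1 m2 r -> wadd m1 m2 r' -> r = r'.
Proof.
  intros H1 H2. apply functional_extensionality. intro x.
  specialize (H1 x). specialize (H2 x). congruence.
Qed.

Lemma wle_nle {X : Type} (m1 m2 : X -> U) : wle m1 m2 -> forall x, le (m1 x) (m2 x).
Proof. intros [m [_ H]] x. exists (m x). apply H. Qed.

End Weights.

Section Derivations.
Variable A : PSemiring.
Variables (Sigma Act Tst : Type).
Variable asem : Act -> Sigma -> (Sigma -> car A).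
Variable tsem : Tst -> Sigma -> bool.
Hypothesis asem_weight : forall a s, is_weight (asem a s).
Local Notation U := (car A).
Local Notation W := (Sigma -> U).
Local Notation mul := (@pmul A).
Local Notation zero := (pzero A).
Local Notation one := (pone A).
Local Notation is_sum := (@is_sum A _).
Local Notation Sem := (sem asem tsem).
Local Notation post := (post asem tsem).
Local Notation Der := (derives tsem (Omega asem tsem)).

Lemma sem_weight C : forall s r, Sem C s r -> is_weight r.
Proof.
  induction C; intros s r H; simpl in H.
  - subst. apply is_weight_eta.
  - destruct H as [m1 [_ [g [_ [_ Hw]]]]]. auto.
  - destruct H as [m1 [m2 [_ [_ [_ Hw]]]]]. auto.
  - subst. apply is_weight_lscale, is_weight_eta.
  - destruct H as [f [[[Hw _] _] ->]]. auto.
  - subst. auto.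
Qed.

Lemma sem_det C : forall s r r', Sem C s r -> Sem C s r' -> r = r'.
Proof.
  induction C; intros s r r' H H'; simpl in H, H'.
  - congruence.
  - destruct H as [m1 [H1 Hb]], H' as [m1' [H1' Hb']].
    rewrite <- (IHC1 _ _ _ H1 H1') in Hb'. exact (bind_det IHC2 Hb Hb').
  - destruct H as [m1 [m2 [H1 [H2 [H3 _]]]]], H' as [m1' [m2' [H1' [H2' [H3' _]]]]].
    rewrite <- (IHC1 _ _ _ H1 H1'), <- (IHC2 _ _ _ H2 H2') in H3'.
    exact (wadd_det H3 H3').
  - congruence.
  - destruct H as [f [[Hf Hmin] ->]], H' as [f' [[Hf' Hmin'] ->]].
    apply functional_extensionality. intro y.
    apply nle_antisym; apply wle_nle; [apply Hmin | apply Hmin']; auto.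
  - congruence.
Qed.

Lemma asrtW_post C (phi : asrt A Sigma) : asrtW (post C phi).
Proof. intros w [m0 [_ [_ [_ [_ Hw]]]]]. exact Hw. Qed.

Definition derivable_at_points (C : cmd A Act Tst) : Prop :=
  forall x r, Sem C x r -> Der (fun m => m = eta A x) C (fun m => m = r).

Lemma derives_zero C :
  Der (fun w => w = fun _ => zero) C (fun w : W => w = fun _ => zero).
Proof.
  apply d_conseq with (p := bigoplus (T := False) (fun t => match t with end))
                      (q := bigoplus (T := False) (fun t => match t with end)).
  - intros w ->. exists (fun t : False => match t with end).
    split; [intros []|]. split; [|apply is_weight_zero].
    intro y. apply is_sum_empty; [intros [] | reflexivity].
  - apply d_choice. intros [].
  - intros w [ms [_ [Hs _]]]. apply functional_extensionality. intro y.
    apply (is_sum_empty (I := fun _ : False => True) (fun t => ms t y)); [intros [] | apply Hs].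
  - intros w ->. apply is_weight_zero.
Qed.

Lemma derives_singleton_family C (m : W) (g : Sigma -> W) :
  derivable_at_points C -> is_weight m -> (forall x, supp m x -> Sem C x (g x)) ->
  Der (fun m0 => m0 = m) C
    (fun w => (forall y, is_sum (fun _ => True) (fun x => mul (m x) (g x y)) (w y)) /\ is_weight w).
Proof.
  intros HC Hm Hg.
  apply d_conseq with (p := bigoplus (fun x w => w = lscale (m x) (eta A x)))
                      (q := bigoplus (fun x w => w = lscale (m x) (g x))).
  - intros w ->. exists (fun x => lscale (m x) (eta A x)). split; [reflexivity|].
    split; auto. intro y. apply is_sum_eta_r.
  - apply d_choice. intro x.
    destruct (excluded_middle_informative (supp m x)) as [Hx|Hx].
    + apply d_conseq with (p := aodot_l (m x) (fun w => w = eta A x))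
                          (q := aodot_l (m x) (fun w => w = g x)).
      * intros w ->. exists (eta A x). auto.
      * apply d_scale, HC, Hg, Hx.
      * intros w [m0 [-> ->]]. reflexivity.
      * intros w ->. apply is_weight_lscale. eapply sem_weight, Hg, Hx.
    + rewrite (not_supp_zero Hx), !lscale_0. apply derives_zero.
  - intros w [ms [Hms [Hs Hw]]]. split; auto. intro y.
    eapply is_sum_ext; [|exact (Hs y)]. intros x _. simpl. rewrite (Hms x). reflexivity.
  - intros w [_ Hw]; auto.
Qed.

Lemma derives_singleton_post C (m : W) : derivable_at_points C -> is_weight m ->
  (forall x, supp m x -> exists r, Sem C x r) ->
  Der (fun m0 => m0 = m) C (post C (fun m0 => m0 = m)).
Proof.
  intros HC Hm Hex.
  set (g := fun x => epsilon (inhabits (fun _ : Sigma => zero)) (Sem C x)).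
  assert (Hg : forall x, supp m x -> Sem C x (g x)).
  { intros x Hx. apply epsilon_spec. auto. }
  eapply d_conseq; [| exact (derives_singleton_family HC Hm Hg) | | apply asrtW_post].
  - auto.
  - intros w [Hs Hw]. exists m. split; auto. apply bind_total. exists g. auto.
Qed.

Lemma derives_singleton_bind C (m r : W) : derivable_at_points C -> is_weight m ->
  bind (Sem C) m r -> Der (fun m0 => m0 = m) C (fun w => w = r).
Proof.
  intros HC Hm Hb.
  assert (Hex : forall x, supp m x -> exists r, Sem C x r).
  { apply bind_total in Hb as [g [Hg _]]. eauto. }
  eapply d_conseq; [| exact (derives_singleton_post HC Hm Hex) | |].
  - auto.
  - intros w [m0 [-> Hb']]. exact (bind_det (@sem_det C) Hb' Hb).
  - intros w ->. destruct Hb as [_ [_ [_ Hw]]]. exact Hw.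
Qed.

Lemma derives_post C (phi : asrt A Sigma) : derivable_at_points C ->
  well_formed asem tsem C -> asrtW phi -> Der phi C (post C phi).
Proof.
  intros HC Hwf Hphi.
  apply d_conseq with
      (p := aunion (fun t : {m | phi m} => fun m0 => m0 = proj1_sig t))
      (q := aunion (fun t : {m | phi m} => post C (fun m0 => m0 = proj1_sig t))).
  - intros m Hm. exists (exist _ m Hm). reflexivity.
  - apply d_exists. intros [m Hm]. apply derives_singleton_post; auto.
  - intros w [[m Hm] [m0 [E Hb]]]. simpl in E. subst. exists m. auto.
  - apply asrtW_post.
Qed.

Lemma points_skip : derivable_at_points (Skip A Act Tst).
Proof. intros x r ->. apply d_skip. intros w ->. apply is_weight_eta. Qed.

Lemma points_atom a : derivable_at_points (Atom A Tst a).
Proof.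
  intros x r H. simpl in H. subst. apply d_ax.
  split; [eauto|]. split; [intros w ->; apply is_weight_eta|].
  split; [intros w ->; auto|].
  intros m m' -> Hb.
  destruct (excluded_middle_informative (one = zero)) as [E|E].
  - apply functional_extensionality. intro y.
    rewrite (trivial_of_one_eq_zero E (m' y)), (trivial_of_one_eq_zero E (asem a x y)). auto.
  - exact (bind_eta E Hb).
Qed.

Lemma well_formed_assume e : well_formed asem tsem (Assume Act e).
Proof. intro s. eexists. reflexivity. Qed.

Lemma points_assume e : derivable_at_points (Assume Act e).
Proof.
  intros x r H. simpl in H. subst.
  eapply d_conseq; [| apply d_assume with (u := eeval tsem e x) | |].
  - intros m0 Hm0. exact Hm0.
  - intros w ->. apply is_weight_eta.
  - intros m s -> Hs. rewrite (supp_eta Hs). auto.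
  - intros w [m0 [-> ->]]. symmetry. apply lscale_eta.
  - intros w ->. apply is_weight_lscale, is_weight_eta.
Qed.

Lemma points_plus C1 C2 : derivable_at_points C1 -> derivable_at_points C2 ->
  derivable_at_points (Plus C1 C2).
Proof.
  intros H1 H2 x r [m1 [m2 [E1 [E2 [E3 Hw]]]]].
  eapply d_conseq; [| apply d_plus; [exact (H1 _ _ E1) | exact (H2 _ _ E2)] | |].
  - auto.
  - intros w [a [b [-> [-> [Hab _]]]]]. exact (wadd_det Hab E3).
  - intros w ->; auto.
Qed.

Lemma points_seq C1 C2 : derivable_at_points C1 -> derivable_at_points C2 ->
  derivable_at_points (Seq C1 C2).
Proof.
  intros H1 H2 x r [m1 [E1 Hb]].
  eapply d_seq; [exact (H1 _ _ E1)|].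
  apply derives_singleton_bind; eauto using sem_weight.
Qed.

End Derivations.

Section Iteration.
Variable A : PSemiring.
Variables (Sigma Act Tst : Type).
Variable asem : Act -> Sigma -> (Sigma -> car A).
Variable tsem : Tst -> Sigma -> bool.
Hypothesis asem_weight : forall a s, is_weight (asem a s).
Local Notation U := (car A).
Local Notation W := (Sigma -> U).
Local Notation add := (@padd A).
Local Notation mul := (@pmul A).
Local Notation zero := (pzero A).
Local Notation le := (nle (@padd A)).
Local Notation is_sum := (@is_sum A _).
Local Notation Sem := (sem asem tsem).
Local Notation post := (post asem tsem).
Local Notation T := (fun _ : Sigma => True).

Lemma bind_assume (e : exp A Tst) w w' : bind (Sem (Assume Act e)) w w' ->
  forall t, w' t = mul (w t) (eeval tsem e t).
Proof.
  intros H t. apply bind_total in H as [g [Hg1 [Hg2 _]]].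
  apply (is_sum_unique (Hg2 t)).
  eapply is_sum_ext; [|exact (is_sum_eta_r t (fun x => mul (w x) (eeval tsem e x)))].
  intros x _. simpl. destruct (excluded_middle_informative (supp w x)) as [Hx|Hx].
  - rewrite (Hg1 x Hx). unfold lscale. symmetry. apply pmul_assoc.
  - rewrite (not_supp_zero Hx), !pmul_0l. auto.
Qed.

Section LeastFixedPoint.
Variable C : cmd A Act Tst.
Variables e e' : exp A Tst.
Variable f : Sigma -> W.
Hypothesis f_lfp : is_lfp tsem (Sem C) e e' f.

Local Notation E s := (eeval tsem e s).
Local Notation E' s := (eeval tsem e' s).
Local Notation Phi := (PhiR tsem (Sem C) e e').

Lemma lfp_fix s : Phi f s (f s).
Proof. apply f_lfp. Qed.

Lemma lfp_weight s : is_weight (f s).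
Proof. apply f_lfp. Qed.

Definition body s : W := epsilon (inhabits (fun _ => zero)) (Sem C s).

Lemma body_sem s : Sem C s (body s).
Proof. unfold body. apply epsilon_spec. destruct (lfp_fix s) as [mC [_ [H _]]]. eauto. Qed.

Lemma PhiR_inv k s r : Phi k s r -> exists b,
  (forall t, is_sum T (fun x => mul (body s x) (k x t)) (b t)) /\
  (forall t, add (mul (E s) (b t)) (mul (E' s) (eta A s t)) = Some (r t)) /\ is_weight b.
Proof.
  intros [mC [b [H1 [H2 [H3 _]]]]].
  rewrite (sem_det H1 (body_sem s)) in H2.
  apply bind_total in H2 as [g [Hg1 [Hg2 Hw]]].
  exists b. split; [|split]; auto.
  intro t. eapply is_sum_ext; [|exact (Hg2 t)]. intros x _. simpl.
  destruct (excluded_middle_informative (supp (body s) x)) as [Hx|Hx].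
  - rewrite (Hg1 x Hx). auto.
  - rewrite (not_supp_zero Hx), !pmul_0l. auto.
Qed.

Lemma PhiR_intro k s b r : (forall t, is_sum T (fun x => mul (body s x) (k x t)) (b t)) ->
  is_weight b -> (forall t, add (mul (E s) (b t)) (mul (E' s) (eta A s t)) = Some (r t)) ->
  is_weight r -> Phi k s r.
Proof.
  intros H1 H2 H3 H4. exists (body s), b.
  split; [apply body_sem|]. split; [apply bind_total; exists k; auto | auto].
Qed.

Lemma PhiR_mono k k' s r r' : (forall x t, le (k x t) (k' x t)) ->
  Phi k s r -> Phi k' s r' -> forall t, le (r t) (r' t).
Proof.
  intros Hk H H' t.
  destruct (PhiR_inv H) as [b [Hb1 [Hb2 _]]], (PhiR_inv H') as [b' [Hb1' [Hb2' _]]].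
  assert (L : le (b t) (b' t)).
  { eapply is_sum_le_mono; [|apply Hb1|apply Hb1']. intros x _. apply pmul_le_mono_l, Hk. }
  exact (padd_le_compat (pmul_le_mono_l _ L) (nle_refl _) (Hb2' t) (Hb2 t)).
Qed.

Lemma PhiR_below_lfp k : (forall x t, le (k x t) (f x t)) -> forall s, exists r, Phi k s r.
Proof.
  intros Hk s. destruct (PhiR_inv (lfp_fix s)) as [bf [Hbf1 [Hbf2 Hbfw]]].
  set (bk := fun t => epsilon (inhabits zero) (is_sum T (fun x => mul (body s x) (k x t)))).
  assert (Hbk : forall t, is_sum T (fun x => mul (body s x) (k x t)) (bk t) /\ le (bk t) (bf t)).
  { intro t.
    destruct (is_sum_dominated (fun x _ => pmul_le_mono_l (body s x) (Hk x t)) (Hbf1 t))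
      as [v [Hv Lv]].
    assert (Hs : is_sum T (fun x => mul (body s x) (k x t)) (bk t)) by (apply epsilon_spec; eauto).
    rewrite (is_sum_unique Hs Hv). auto. }
  set (r := fun t => get_or_zero (add (mul (E s) (bk t)) (mul (E' s) (eta A s t)))).
  assert (Hr : forall t, add (mul (E s) (bk t)) (mul (E' s) (eta A s t)) = Some (r t) /\
                         le (r t) (f s t)).
  { intro t.
    destruct (padd_le_mono (pmul_le_mono_l (E s) (proj2 (Hbk t))) (nle_refl _) (Hbf2 t))
      as [v [Hv Lv]].
    unfold r. rewrite Hv. auto. }
  exists r. apply PhiR_intro with bk.
  - intro t; apply Hbk.
  - apply is_weight_le with bf; auto. intro t; apply Hbk.
  - intro t; apply Hr.
  - apply is_weight_le with (f s); [intro t; apply Hr | apply lfp_weight].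
Qed.

Fixpoint approx (n : nat) : Sigma -> W :=
  match n with
  | 0 => fun _ _ => zero
  | S n => fun s => epsilon (inhabits (fun _ => zero)) (Phi (approx n) s)
  end.

Lemma approx_spec n :
  (forall s, Phi (approx n) s (approx (S n) s)) /\ (forall s t, le (approx n s t) (f s t)).
Proof.
  induction n as [|n [IH1 IH2]].
  - assert (Hle : forall s t, le (approx 0 s t) (f s t)) by (intros; apply zero_nle).
    split; auto. intro s. exact (epsilon_spec _ _ (PhiR_below_lfp Hle s)).
  - assert (Hle : forall s t, le (approx (S n) s t) (f s t)).
    { intros s t. exact (PhiR_mono IH2 (IH1 s) (lfp_fix s) t). }
    split; auto. intro s. exact (epsilon_spec _ _ (PhiR_below_lfp Hle s)).
Qed.

Lemma approx_increasing s t : increasing (fun n => approx n s t).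
Proof.
  intro n. revert s t. induction n as [|n IH]; intros s t.
  - apply zero_nle.
  - exact (PhiR_mono IH (proj1 (approx_spec n) s) (proj1 (approx_spec (S n)) s) t).
Qed.

Definition approx_body n s t : U :=
  epsilon (inhabits zero) (is_sum T (fun x => mul (body s x) (approx n x t))).

Lemma approx_body_spec n s t :
  is_sum T (fun x => mul (body s x) (approx n x t)) (approx_body n s t) /\
  add (mul (E s) (approx_body n s t)) (mul (E' s) (eta A s t)) = Some (approx (S n) s t).
Proof.
  destruct (PhiR_inv (proj1 (approx_spec n) s)) as [b [Hb1 [Hb2 _]]].
  assert (H : is_sum T (fun x => mul (body s x) (approx n x t)) (approx_body n s t)).
  { unfold approx_body. apply epsilon_spec. eauto. }
  rewrite (is_sum_unique H (Hb1 t)). auto.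
Qed.

Lemma approx_body_increasing s t : increasing (fun n => approx_body n s t).
Proof.
  intro n. eapply is_sum_le_mono; [|apply approx_body_spec|apply approx_body_spec].
  intros x _. apply pmul_le_mono_l, approx_increasing.
Qed.

Definition approx_sup s t : U := epsilon (inhabits zero) (sup_seq (fun n => approx n s t)).

Lemma approx_sup_spec s t : sup_seq (fun n => approx n s t) (approx_sup s t).
Proof. unfold approx_sup. apply epsilon_spec, sup_seq_exists, approx_increasing. Qed.

Lemma approx_sup_le_lfp s t : le (approx_sup s t) (f s t).
Proof. apply (is_sup_least (approx_sup_spec s t)). intros u [n ->]. apply approx_spec. Qed.

Lemma is_sum_body_approx_sup s t B : sup_seq (fun n => approx_body n s t) B ->
  is_sum T (fun x => mul (body s x) (approx_sup x t)) B.
Proof.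
  apply (is_sum_sup_seq (a := fun n x => mul (body s x) (approx n x t))).
  - intros x _ n. apply pmul_le_mono_l, approx_increasing.
  - intro n. apply approx_body_spec.
  - intros x _. apply sup_seq_pmul_l; [apply approx_increasing | apply approx_sup_spec].
Qed.

(* Scott continuity of [+] and [.] lets [Phi] commute with the supremum of the chain. *)
Lemma approx_sup_unfold s t B : sup_seq (fun n => approx_body n s t) B ->
  add (mul (E s) B) (mul (E' s) (eta A s t)) = Some (approx_sup s t).
Proof.
  intro HB.
  assert (Hinc : increasing (fun n => mul (E s) (approx_body n s t))).
  { intro n. apply pmul_le_mono_l, approx_body_increasing. }
  destruct (padd_cont (a := mul (E' s) (eta A s t)) (increasing_directed Hinc)
              (sup_seq_pmul_l (E s) (approx_body_increasing s t) HB)) as [v [Hv Sv]].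
  { intros d [n ->]. exists (approx (S n) s t). rewrite padd_comm. apply approx_body_spec. }
  assert (Sv' : sup_seq (fun n => approx (S n) s t) v).
  { eapply is_sup_ext; [|exact Sv]. intro u. split.
    - intros [d [[n ->] Hd]]. exists n.
      rewrite padd_comm, (proj2 (approx_body_spec n s t)) in Hd. congruence.
    - intros [n ->]. exists (mul (E s) (approx_body n s t)). split; eauto.
      rewrite padd_comm. apply approx_body_spec. }
  rewrite padd_comm, Hv. f_equal.
  exact (is_sup_unique Sv' (sup_seq_shift (approx_increasing s t) (approx_sup_spec s t))).
Qed.

Lemma approx_sup_fix : is_fix tsem (Sem C) e e' approx_sup.
Proof.
  assert (Hw : forall s, is_weight (approx_sup s)).
  { intro s. apply is_weight_le with (f s); [intro t; apply approx_sup_le_lfp | apply lfp_weight]. }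
  split; auto. intro s.
  set (B := fun t => epsilon (inhabits zero) (sup_seq (fun n => approx_body n s t))).
  assert (HB : forall t, sup_seq (fun n => approx_body n s t) (B t)).
  { intro t. apply epsilon_spec, sup_seq_exists, approx_body_increasing. }
  destruct (PhiR_inv (lfp_fix s)) as [bf [Hbf [_ Hbfw]]].
  apply PhiR_intro with B; auto.
  - intro t. apply is_sum_body_approx_sup, HB.
  - apply is_weight_le with bf; auto. intro t. apply (is_sup_least (HB t)). intros u [n ->].
    eapply is_sum_le_mono; [|apply approx_body_spec|apply Hbf].
    intros x _. apply pmul_le_mono_l, approx_spec.
  - intro t. apply approx_sup_unfold, HB.
Qed.

Lemma lfp_sup_approx s t : sup_seq (fun n => approx n s t) (f s t).
Proof.
  replace (f s t) with (approx_sup s t); [apply approx_sup_spec|].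
  apply nle_antisym; [apply approx_sup_le_lfp | apply wle_nle, (proj2 f_lfp), approx_sup_fix].
Qed.

(* The [N]-th partial sum of the exits [w n . e'] of a run of the loop from [w 0]
   is [w 0] pushed through the [N]-th approximant. *)
Lemma partial_sums_approx N (w : nat -> W) :
  (forall n, exists a, (forall t, a t = mul (w n t) (E t)) /\ bind (Sem C) a (w (S n))) ->
  forall t v, fsum (seq 0 N) (fun n => mul (w n t) (E' t)) = Some v ->
  is_sum T (fun s => mul (w 0 s) (approx N s t)) v.
Proof.
  revert w. induction N as [|N IH]; intros w Hw t v Hv.
  - injection Hv as <-. eapply is_sum_ext; [|apply is_sum_zero].
    intros s _. symmetry. apply pmul_0r.
  - apply fsum_cons in Hv as [s' [Hs' Hv]]. rewrite fsum_seq_shift in Hs'.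
    pose proof (IH (fun n => w (S n)) (fun n => Hw (S n)) t s' Hs') as IHw. cbv beta in IHw.
    destruct (Hw 0) as [a [Ha Hb]]. apply bind_total in Hb as [g [Hg1 [Hg2 _]]].
    destruct (fubini (I := T) (J := T) (a := fun r s => mul (mul (a s) (g s r)) (approx N r t))
                (fun r _ => is_sum_pmul_r _ (Hg2 r)) IHw) as [c [Hc1 Hc2]].
    assert (Hc : forall s, c s = mul (w 0 s) (mul (E s) (approx_body N s t))).
    { intro s. rewrite pmul_assoc, <- Ha. apply (is_sum_unique (Hc1 s I)).
      eapply is_sum_ext; [|exact (is_sum_pmul_l (a s) (proj1 (approx_body_spec N s t)))].
      intros r _. simpl. destruct (excluded_middle_informative (supp a s)) as [Hx|Hx].
      - rewrite (sem_det (Hg1 s Hx) (body_sem s)). apply pmul_assoc.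
      - rewrite (not_supp_zero Hx), !pmul_0l. auto. }
    rewrite padd_comm in Hv. eapply is_sum_add; [| | exact Hv |].
    + eapply is_sum_ext; [|exact Hc2]. intros s _. apply Hc.
    + eapply is_sum_ext; [|exact (is_sum_eta_r t (fun s => mul (w 0 s) (E' s)))].
      intros s _. symmetry. apply pmul_assoc.
    + intros s _. apply pmul_addr, approx_body_spec.
Qed.

End LeastFixedPoint.

Fixpoint post_iterate (C : cmd A Act Tst) (e : exp A Tst) (p : asrt A Sigma) (n : nat) :
  asrt A Sigma :=
  match n with
  | 0 => p
  | S n => post C (post (Assume Act e) (post_iterate C e p n))
  end.

Lemma asrtW_post_iterate C e x n : asrtW (post_iterate C e (fun m => m = eta A x) n).
Proof. destruct n; [intros w ->; apply is_weight_eta | apply asrtW_post]. Qed.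

Lemma post_iterate_unique C e x n w w' :
  post_iterate C e (fun m => m = eta A x) n w ->
  post_iterate C e (fun m => m = eta A x) n w' -> w = w'.
Proof.
  revert w w'. induction n as [|n IH]; intros w w' H1 H2; [simpl in H1, H2; congruence|].
  destruct H1 as [a1 [[w1 [H11 H12]] H13]], H2 as [a2 [[w2 [H21 H22]] H23]].
  rewrite (IH _ _ H11 H21) in H12.
  rewrite (bind_det (@sem_det _ _ _ _ asem tsem (Assume Act e)) H12 H22) in H13.
  exact (bind_det (@sem_det _ _ _ _ asem tsem C) H13 H23).
Qed.

Lemma iter_converges C e e' f x : is_lfp tsem (Sem C) e e' f ->
  converges (fun n => post (Assume Act e') (post_iterate C e (fun m => m = eta A x) n))
            (fun w => w = f x).
Proof.
  intros f_lfp ms m Hq [Hs _].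
  set (P := post_iterate C e (fun m => m = eta A x)).
  set (w := fun n => epsilon (inhabits (fun _ : Sigma => zero)) (P n)).
  assert (Hw : forall n, P n (w n)).
  { intro n. apply epsilon_spec. destruct (Hq n) as [w0 [H0 _]]. eauto. }
  assert (Hw0 : w 0 = eta A x) by exact (Hw 0).
  assert (Hms : forall n t, ms n t = mul (w n t) (eeval tsem e' t)).
  { intros n t. destruct (Hq n) as [w0 [H0 H1]].
    rewrite (post_iterate_unique H0 (Hw n)) in H1. exact (bind_assume H1 t). }
  assert (Hstep : forall n, exists a, (forall t, a t = mul (w n t) (eeval tsem e t)) /\
                                      bind (Sem C) a (w (S n))).
  { intro n. destruct (Hw (S n)) as [a [[w0 [H0 H1]] H2]].
    rewrite (post_iterate_unique H0 (Hw n)) in H1. exists a. split; auto.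
    exact (bind_assume H1). }
  apply functional_extensionality. intro t.
  assert (HQ : forall N, fsum (seq 0 N) (fun n => ms n t) = Some (approx C e e' N x t)).
  { intro N. destruct (fsum (seq 0 N) (fun n => ms n t)) as [v|] eqn:Ev.
    - rewrite (fsum_ext (g := fun n => mul (w n t) (eeval tsem e' t))) in Ev by auto.
      pose proof (partial_sums_approx f_lfp Hstep Ev) as Hv. rewrite Hw0 in Hv.
      f_equal. exact (is_sum_unique Hv (is_sum_eta_l x _)).
    - exfalso. apply (is_sum_defined (Hs t) (l := seq 0 N)); auto.
      split; [apply seq_NoDup | auto]. }
  exact (is_sup_unique (is_sum_nat_sup_seq (Hs t) HQ) (lfp_sup_approx f_lfp x t)).
Qed.

Lemma points_iter C e e' : derivable_at_points asem tsem C ->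
  derivable_at_points asem tsem (Iter C e e').
Proof.
  intros HC x r [f [f_lfp ->]].
  set (phi := post_iterate C e (fun m => m = eta A x)).
  assert (HwfC : well_formed asem tsem C).
  { intro s. exists (body C s). exact (body_sem f_lfp s). }
  apply d_iter with (ps := phi) (qs := fun n => post (Assume Act e') (phi n)).
  - intros w ->. exact (lfp_weight f_lfp x).
  - exact (iter_converges f_lfp).
  - intro n. apply d_seq with (r := post (Assume Act e) (phi n)).
    + apply derives_post; auto using points_assume, well_formed_assume.
      apply asrtW_post_iterate.
    + apply derives_post; auto using asrtW_post.
  - intro n. apply derives_post; auto using points_assume, well_formed_assume.
    apply asrtW_post_iterate.
Qed.

End Iteration.

Lemma points_all (A : PSemiring) (Sigma Act Tst : Type)
    (asem : Act -> Sigma -> (Sigma -> car A)) (tsem : Tst -> Sigma -> bool)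
    (asem_weight : forall a s, is_weight (asem a s)) (C : cmd A Act Tst) :
  derivable_at_points asem tsem C.
Proof.
  induction C.
  - apply points_skip.
  - apply points_seq; auto.
  - apply points_plus; auto.
  - apply points_assume.
  - apply points_iter; auto.
  - apply points_atom; auto.
Qed.

Theorem lemma3p6 (S : PSemiring) (Sigma Act Tst : Type)
    (asem : Act -> Sigma -> (Sigma -> car S)) (tsem : Tst -> Sigma -> bool)
    (Hasem : forall a s, is_weight (asem a s))
    (C : cmd S Act Tst) (HC : well_formed asem tsem C)
    (phi : asrt S Sigma) (Hphi : asrtW phi) :
  derives tsem (Omega asem tsem) phi C (post asem tsem C phi).
Proof.
  apply derives_post; auto using points_all.
Qed.
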